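(* Let $>$ be a $\mathcal B$-compatible reduction order. Every fair and non-failing run $(\mathcal E,\varnothing)\vdash^*_{\mathcal I_B}(\varnothing,\mathcal R)$ for an ES $\mathcal E$ in $\mathcal I_B$ produces a $\mathcal B$-complete presentation of $\mathcal E$: $\leftrightarrow^*_{\mathcal E\cup\mathcal B}=\leftrightarrow^*_{\mathcal R\cup\mathcal B}$, $\mathcal R$ is terminating modulo $\mathcal B$ and Church–Rosser modulo $\mathcal B$.
   Context: Terms over a signature $\mathcal F$ and variables. For a set $\mathcal E$ of pairs of terms (equations and rules read as oriented pairs), $s\to_{\mathcal E}t$ iff $s|_p=\ell\sigma$, $t=s[r\sigma]_p$ for some $(\ell,r)\in\mathcal E$, position $p$, substitution $\sigma$; $\leftarrow$ is the inverse, $\leftrightarrow$ the symmetric closure. $\mathcal B$ is a fixed ES with $\mathrm{Var}(\ell)=\mathrm{Var}(r)$ for all $\ell\approx r\in\mathcal B$; $\sim_{\mathcal B}=\leftrightarrow^*_{\mathcal B}$, $\mathcal B^\pm=\mathcal B\cup\{t\approx s\mid s\approx t\in\mathcal B\}$; $\to_{\mathcal R/\mathcal B}=\sim_{\mathcal B}\cdot\to_{\mathcal R}\cdot\sim_{\mathcal B}$; $s\downarrow^\sim_{\mathcal R}t$ iff $s\to^*_{\mathcal R}\cdot\sim_{\mathcal B}\cdot\leftarrow^*_{\mathcal R}t$. Terminating modulo $\mathcal B$: no infinite $\to_{\mathcal R/\mathcal B}$-sequence; Church–Rosser modulo $\mathcal B$: $\leftrightarrow^*_{\mathcal R\cup\mathcal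 B}\subseteq\downarrow^\sim_{\mathcal R}$. A $\mathcal B$-compatible reduction order is a well-founded order on terms closed under contexts and substitutions with $\sim_{\mathcal B}\cdot>\cdot\sim_{\mathcal B}\subseteq>$. The inference system $\mathcal I_B$ (parameterized by $>$) on pairs $(\mathcal E,\mathcal R)$ ($\uplus$ disjoint union, $s\approx^\pm t$ means $s\approx t$ or $t\approx s$): Deduce: $(\mathcal E,\mathcal R)\vdash(\mathcal E\cup\{s\approx t\},\mathcal R)$ if $s\leftarrow_{\mathcal R}\cdot\to_{\mathcal R\cup\mathcal B^\pm}t$. Orient: $(\mathcal E\uplus\{s\approx^\pm t\},\mathcal R)\vdash(\mathcal E,\mathcal R\cup\{s\to t\})$ if $s>t$. Delete: $(\mathcal E\uplus\{s\approx t\},\mathcal R)\vdash(\mathcal E,\mathcal R)$ if $s\sim_{\mathcal B}t$. Simplify: $(\mathcal E\uplus\{s\approx^\pm t\},\mathcal R)\vdash(\mathcal E\cup\{u\approx t\},\mathcal R)$ if $s\to_{\mathcal R}u$. Collapse: $(\mathcal E,\mathcal R\uplus\{s\to t\})\vdash(\mathcal E\cup\{u\approx t\},\mathcal R)$ if $s\to_{\mathcal R}u$. Compose: $(\mathcal E,\mathcal R\uplus\{s\to t\})\vdash(\mathcal E,\mathcal R\cup\{s\to u\})$ if $t\to_{\mathcal R}u$. A run for $\mathcal E$ goes from $(\mathcal E_0,\mathcal R_0)=(\mathcal E,\varnothing)$ to $(\mathcal E_n,\mathcal R_n)$; it fails if $\mathcal E_n\ne\varnothing$, and is fair if $\mathcal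 R_n$ is left-linear and $\mathrm{PCP}(\mathcal R_n)\cup\mathrm{PCP}^\pm(\mathcal R_n,\mathcal B^\pm)\subseteq\ \downarrow^\sim_{\mathcal R_n}\cup\bigcup_{i=0}^n\leftrightarrow_{\mathcal E_i}$. Critical pairs: for sets of oriented pairs $\mathcal R_1,\mathcal R_2$ (equations of $\mathcal B^\pm$ read as oriented pairs), an overlap is $\langle\ell_1\to r_1,p,\ell_2\to r_2\rangle$ with $\ell_i\to r_i$ variants of elements of $\mathcal R_i$ without common variables, $p$ a non-variable position of $\ell_2$, $\ell_1$ and $\ell_2|_p$ unifiable, and the two rules not variants if $p=\epsilon$; with an mgu $\sigma$ it yields the critical pair $\ell_2\sigma[r_1\sigma]_p\approx r_2\sigma$, which is prime if all proper subterms of $\ell_2\sigma|_p$ are normal forms w.r.t. the TRS $\mathcal R$ under consideration. $\mathrm{PCP}(\mathcal R)$: prime critical pairs from overlaps of $\mathcal R$ with itself; $\mathrm{PCP}^\pm(\mathcal R,\mathcal B^\pm)$: prime critical pairs from overlaps between $\mathcal R$ and $\mathcal B^\pm$ in either order. *)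

From Stdlib Require Import List Relations.
Import ListNotations.
Set Implicit Arguments.

Section Terms.
Variable F : Type.

(* First-order terms; variables are natural numbers (an infinite supply). *)
Inductive term : Type :=
| Var : nat -> term
| Fun : F -> list term -> term.

(* Sets of pairs of terms (ESs and TRSs, read as oriented pairs). *)
Definition rules := term -> term -> Prop.

Definition empty_rules : rules := fun _ _ => False.
Definition runion (E1 E2 : rules) : rules := fun s t => E1 s t \/ E2 s t.
Definition single (l r : term) : rules := fun s t => s = l /\ t = r.
Definition same (E1 E2 : rules) : Prop := forall s t, E1 s t <-> E2 s t.
Definition sym_rules (E : rules) : rules := fun s t => E s t \/ E t s.

Definition disj_add (E E0 : rules) (l r : term) : Prop :=
  ~ E0 l r /\ same E (runion E0 (single l r)).

Fixpoint subst (sigma : nat -> term) (t : term) : term :=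
  match t with
  | Var x => sigma x
  | Fun f ts => Fun f (map (subst sigma) ts)
  end.

Fixpoint vars (t : term) : list nat :=
  match t with
  | Var x => [x]
  | Fun f ts => flat_map vars ts
  end.

Definition pos := list nat.

Fixpoint subterm_at (t : term) (p : pos) : option term :=
  match p with
  | [] => Some t
  | i :: q =>
      match t with
      | Var _ => None
      | Fun f ts =>
          match nth_error ts i with
          | Some u => subterm_at u q
          | None => None
          end
      end
  end.

Fixpoint set_nth (A : Type) (l : list A) (i : nat) (a : A) : list A :=
  match l, i with
  | [], _ => []
  | _ :: l', 0 => a :: l'
  | b :: l', S j => b :: set_nth l' j a
  end.

(* t[u]_p (meaningful when p is a position of t) *)
Fixpoint replace_at (t : term) (p : pos) (u : term) : term :=
  match p with
  | [] => u
  | i :: q =>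
      match t with
      | Var _ => t
      | Fun f ts => Fun f (set_nth ts i (replace_at (nth i ts t) q u))
      end
  end.

Definition rstep (E : rules) (s t : term) : Prop :=
  exists p l r sigma,
    E l r /\ subterm_at s p = Some (subst sigma l) /\
    t = replace_at s p (subst sigma r).

Definition conv_step (E : rules) : relation term :=
  fun s t => rstep E s t \/ rstep E t s.
Definition conv (E : rules) : relation term :=
  clos_refl_trans term (conv_step E).
Definition rsteps (E : rules) : relation term :=
  clos_refl_trans term (rstep E).

Section ModuloB.
Variable B : rules.

Definition simB : relation term := conv B.

Definition rstep_mod (R : rules) (s t : term) : Prop :=
  exists s' t', simB s s' /\ rstep R s' t' /\ simB t' t.

Definition joinable_mod (R : rules) (s t : term) : Prop :=
  exists u v, rsteps R s u /\ simB u v /\ rsteps R t v.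

Definition terminating_mod (R : rules) : Prop :=
  ~ exists f : nat -> term, forall i, rstep_mod R (f i) (f (S i)).

Definition church_rosser_mod (R : rules) : Prop :=
  forall s t, conv (runion R B) s t -> joinable_mod R s t.

Definition B_compatible_reduction_order (gt : relation term) : Prop :=
  (forall s t u, gt s t -> gt t u -> gt s u) /\
  (forall s, ~ gt s s) /\
  well_founded (fun x y => gt y x) /\
  (forall s t u p v, gt s t -> subterm_at u p = Some v ->
                     gt (replace_at u p s) (replace_at u p t)) /\
  (forall s t sigma, gt s t -> gt (subst sigma s) (subst sigma t)) /\
  (forall s s' t' t, simB s s' -> gt s' t' -> simB t' t -> gt s t).

Definition vars_preserving (E : rules) : Prop :=
  forall l r, E l r -> forall x, In x (vars l) <-> In x (vars r).

Definition renaming (rho : nat -> nat) : Prop :=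
  exists rho', (forall x, rho' (rho x) = x) /\ (forall x, rho (rho' x) = x).

Definition is_variant (l' r' l r : term) : Prop :=
  exists rho, renaming rho /\
    l' = subst (fun x => Var (rho x)) l /\ r' = subst (fun x => Var (rho x)) r.

Definition variant_of (R : rules) (l' r' : term) : Prop :=
  exists l r, R l r /\ is_variant l' r' l r.

Definition mgu (sigma : nat -> term) (u v : term) : Prop :=
  subst sigma u = subst sigma v /\
  forall tau, subst tau u = subst tau v ->
    exists rho, forall x, tau x = subst rho (sigma x).

Definition normal_form (R : rules) (t : term) : Prop := ~ exists u, rstep R t u.

(* prime critical pairs from overlaps <l1 -> r1, p, l2 -> r2> with
   l1 -> r1 from R1 and l2 -> r2 from R2; primality w.r.t. the TRS R *)
Definition pcp (R R1 R2 : rules) (s t : term) : Prop :=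
  exists l1 r1 l2 r2 p sigma f ts,
    variant_of R1 l1 r1 /\ variant_of R2 l2 r2 /\
    (forall x, In x (vars l1 ++ vars r1) -> ~ In x (vars l2 ++ vars r2)) /\
    subterm_at l2 p = Some (Fun f ts) /\
    (p = [] -> ~ is_variant l1 r1 l2 r2) /\
    mgu sigma l1 (Fun f ts) /\
    s = replace_at (subst sigma l2) p (subst sigma r1) /\
    t = subst sigma r2 /\
    (forall q u, q <> [] -> subterm_at (subst sigma (Fun f ts)) q = Some u ->
                 normal_form R u).

Definition left_linear (R : rules) : Prop :=
  forall l r, R l r -> NoDup (vars l).

Definition state := (rules * rules)%type.

Definition inf_step (gt : relation term) (st st' : state) : Prop :=
  let (E, R) := st in let (E', R') := st' in
  (exists s t u, rstep R u s /\ rstep (runion R (sym_rules B)) u t /\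
     same E' (runion E (single s t)) /\ same R' R) \/
  (exists s t, (disj_add E E' s t \/ disj_add E E' t s) /\ gt s t /\
     same R' (runion R (single s t))) \/
  (exists s t, disj_add E E' s t /\ simB s t /\ same R' R) \/
  (exists E0 s t u, (disj_add E E0 s t \/ disj_add E E0 t s) /\ rstep R s u /\
     same E' (runion E0 (single u t)) /\ same R' R) \/
  (exists s t u, disj_add R R' s t /\ rstep R' s u /\
     same E' (runion E (single u t))) \/
  (exists R0 s t u, disj_add R R0 s t /\ rstep R0 t u /\
     same R' (runion R0 (single s u)) /\ same E' E).

Definition is_run (gt : relation term) (E : rules) (n : nat) (st : nat -> state) : Prop :=
  same (fst (st 0)) E /\ same (snd (st 0)) empty_rules /\
  forall i, i < n -> inf_step gt (st i) (st (S i)).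

Definition fair_run (n : nat) (st : nat -> state) : Prop :=
  let Rn := snd (st n) in
  left_linear Rn /\
  forall s t,
    (pcp Rn Rn Rn s t \/ pcp Rn Rn (sym_rules B) s t \/ pcp Rn (sym_rules B) Rn s t) ->
    joinable_mod Rn s t \/ exists i, i <= n /\ conv_step (fst (st i)) s t.

Definition non_failing_run (n : nat) (st : nat -> state) : Prop :=
  same (fst (st n)) empty_rules.

End ModuloB.
End Terms.

From Stdlib Require Import List Relations Lia Arith Classical.
Import ListNotations.

(* Every inference step of I_B is sound for the conversion generated by E and B, and every
   rule it creates is decreasing for the B-compatible reduction order >, so R_n is contained
   in > and hence terminates modulo B.  For the Church-Rosser property we follow the
   proof-ordering argument of completion: read backwards, the run shows that every pair of
   every E_i and R_i, and hence by fairness every prime critical pair of R_n with itself and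
   with B^±, is connected by a conversion lying strictly below one of its endpoints.  For the
   left-linear R_n a critical pair lemma modulo B, restricted to prime overlaps by choosing
   innermost redexes, turns this into the closure below w of every local peak t <-R w ->R s
   and every cliff t ~B w ->R s; well-founded induction on > then yields joinability modulo B
   of every (R u B)-conversion. *)

Arguments Var {F} _.
Arguments Fun {F} _ _.
Arguments vars {F} _.

Lemma nth_error_set_nth_eq {A} (l : list A) i a b :
  nth_error l i = Some a -> nth_error (set_nth l i b) i = Some b.
Proof.
  revert i; induction l; intros [|i]; simpl; intros H; try discriminate; auto.
Qed.

Lemma nth_error_set_nth_neq {A} (l : list A) i j b :
  i <> j -> nth_error (set_nth l i b) j = nth_error l j.
Proof.
  revert i j; induction l; intros [|i] [|j]; simpl; intros H; auto; try lia.
Qed.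

Lemma set_nth_nth {A} (l : list A) i a : nth_error l i = Some a -> set_nth l i a = l.
Proof.
  revert i; induction l; intros [|i]; simpl; intros H; try discriminate.
  - injection H; intros; subst; auto.
  - f_equal; auto.
Qed.

Lemma set_nth_twice {A} (l : list A) i a b : set_nth (set_nth l i a) i b = set_nth l i b.
Proof.
  revert i; induction l; intros [|i]; simpl; auto. f_equal; auto.
Qed.

Lemma set_nth_comm {A} (l : list A) i j a b :
  i <> j -> set_nth (set_nth l i a) j b = set_nth (set_nth l j b) i a.
Proof.
  revert i j; induction l; intros [|i] [|j]; simpl; intros H; auto; try lia.
  f_equal; auto.
Qed.

Lemma map_set_nth {A C} (f : A -> C) l i a : map f (set_nth l i a) = set_nth (map f l) i (f a).
Proof.
  revert i; induction l; intros [|i]; simpl; auto. f_equal; auto.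
Qed.

Lemma set_nth_app {A} (pre post : list A) a b :
  set_nth (pre ++ a :: post) (length pre) b = pre ++ b :: post.
Proof. induction pre; simpl; auto. f_equal; auto. Qed.

Lemma nth_error_app_len {A} (pre post : list A) a :
  nth_error (pre ++ a :: post) (length pre) = Some a.
Proof. induction pre; simpl; auto. Qed.

Lemma NoDup_app_disj {A} (l1 l2 : list A) x : NoDup (l1 ++ l2) -> In x l1 -> ~ In x l2.
Proof.
  induction l1; simpl; intros H Hx; [contradiction|].
  inversion H; subst. destruct Hx as [->|Hx]; auto.
  intros Hl. apply H2. apply in_or_app; auto.
Qed.

Section Terms.
Context {F : Type}.
Local Notation term := (term F).
Implicit Types (t u v w a b c : term) (E B : rules F).

Fixpoint term_nested_ind (P : term -> Prop) (HV : forall x, P (Var x))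
  (HF : forall f ts, Forall P ts -> P (Fun f ts)) (t : term) : P t :=
  match t with
  | Var x => HV x
  | Fun f ts => HF f ts ((fix go (l : list term) : Forall P l :=
        match l with [] => Forall_nil _ | u :: l' => Forall_cons _ (term_nested_ind P HV HF u) (go l') end) ts)
  end.

Lemma subst_subst (s t : nat -> term) u :
  subst t (subst s u) = subst (fun x => subst t (s x)) u.
Proof.
  induction u as [x|f ts IH] using term_nested_ind; simpl; auto.
  f_equal. rewrite map_map. apply map_ext_in. intros a Ha.
  rewrite Forall_forall in IH. auto.
Qed.

Lemma subst_ext (s t : nat -> term) u :
  (forall x, In x (vars u) -> s x = t x) -> subst s u = subst t u.
Proof.
  induction u as [x|f ts IH] using term_nested_ind; simpl; intros H; auto.
  f_equal. apply map_ext_in. intros a Ha.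
  rewrite Forall_forall in IH. apply IH; auto. intros x Hx. apply H.
  apply in_flat_map. eauto.
Qed.

Lemma subst_ext_inv (s t : nat -> term) u :
  subst s u = subst t u -> forall x, In x (vars u) -> s x = t x.
Proof.
  induction u as [y|f ts IH] using term_nested_ind; simpl; intros H x Hx.
  - destruct Hx as [->|[]]; auto.
  - injection H; intros Hm. apply in_flat_map in Hx. destruct Hx as [a [Ha Hxa]].
    rewrite Forall_forall in IH. eapply IH; eauto. eapply ext_in_map; eauto.
Qed.

Lemma subst_id (u : term) : subst Var u = u.
Proof.
  induction u as [x|f ts IH] using term_nested_ind; simpl; auto.
  f_equal. rewrite <- (map_id ts) at 2. apply map_ext_in.
  intros a Ha. rewrite Forall_forall in IH. auto.
Qed.

Lemma vars_subst (s : nat -> term) t y :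
  In y (vars (subst s t)) -> exists z, In z (vars t) /\ In y (vars (s z)).
Proof.
  induction t as [x|f ts IH] using term_nested_ind; simpl; intros H.
  - exists x. auto.
  - apply in_flat_map in H. destruct H as [a [Ha Hy]]. apply in_map_iff in Ha.
    destruct Ha as [b [<- Hb]]. rewrite Forall_forall in IH.
    destruct (IH b Hb Hy) as [z [Hz1 Hz2]]. exists z. split; auto. apply in_flat_map; eauto.
Qed.

Lemma subterm_at_app t p q :
  subterm_at t (p ++ q) = match subterm_at t p with Some u => subterm_at u q | None => None end.
Proof.
  revert t; induction p as [|i p IH]; intros t; simpl; auto.
  destruct t as [x|f ts]; auto. destruct (nth_error ts i); auto.
Qed.

Lemma subterm_at_app_Some t p q u : subterm_at t p = Some u -> subterm_at t (p ++ q) = subterm_at u q.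
Proof. intros H. rewrite subterm_at_app, H. auto. Qed.

Lemma replace_at_app t p q u v :
  subterm_at t p = Some u -> replace_at t (p ++ q) v = replace_at t p (replace_at u q v).
Proof.
  revert t; induction p as [|i p IH]; intros t; simpl; intros H.
  - injection H; intros; subst; auto.
  - destruct t as [x|f ts]; [discriminate|].
    destruct (nth_error ts i) eqn:E; [|discriminate].
    rewrite (nth_error_nth _ _ _ E). f_equal. f_equal. auto.
Qed.

Lemma subterm_at_replace_at t p u v : subterm_at t p = Some u -> subterm_at (replace_at t p v) p = Some v.
Proof.
  revert t; induction p as [|i p IH]; intros t; simpl; intros H; auto.
  destruct t as [x|f ts]; [discriminate|].
  destruct (nth_error ts i) eqn:E; [|discriminate].
  rewrite (nth_error_nth _ _ _ E).
  rewrite (nth_error_set_nth_eq _ _ _ _ E). eauto.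
Qed.

Lemma replace_at_twice t p u v v' :
  subterm_at t p = Some u -> replace_at (replace_at t p v) p v' = replace_at t p v'.
Proof.
  revert t; induction p as [|i p IH]; intros t; simpl; intros H; auto.
  destruct t as [x|f ts]; [discriminate|].
  destruct (nth_error ts i) eqn:E; [|discriminate].
  rewrite (nth_error_nth _ _ _ E).
  rewrite (nth_error_nth _ _ _ (nth_error_set_nth_eq _ _ _ _ E)).
  rewrite set_nth_twice. f_equal. f_equal. eauto.
Qed.

Lemma replace_at_subterm_at t p u : subterm_at t p = Some u -> replace_at t p u = t.
Proof.
  revert t; induction p as [|i p IH]; intros t; simpl; intros H.
  - injection H; auto.
  - destruct t as [x|f ts]; [discriminate|].
    destruct (nth_error ts i) eqn:E; [|discriminate].
    rewrite (nth_error_nth _ _ _ E). rewrite (IH _ H). f_equal. apply set_nth_nth; auto.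
Qed.

Lemma subterm_at_subst (s : nat -> term) t p u :
  subterm_at t p = Some u -> subterm_at (subst s t) p = Some (subst s u).
Proof.
  revert t; induction p as [|i p IH]; intros t; simpl; intros H.
  - injection H; intros; subst; auto.
  - destruct t as [x|f ts]; [discriminate|]. simpl.
    rewrite nth_error_map. destruct (nth_error ts i) eqn:E; [|discriminate]. simpl. auto.
Qed.

Lemma subst_replace_at (s : nat -> term) t p u v :
  subterm_at t p = Some u -> subst s (replace_at t p v) = replace_at (subst s t) p (subst s v).
Proof.
  revert t; induction p as [|i p IH]; intros t; simpl; intros H; auto.
  destruct t as [x|f ts]; [discriminate|]. simpl.
  destruct (nth_error ts i) eqn:E; [|discriminate].
  rewrite (nth_error_nth _ _ _ E).
  rewrite (nth_error_nth (map (subst s) ts) i (x := subst s t)) by (rewrite nth_error_map, E; reflexivity).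
  f_equal. rewrite map_set_nth. f_equal. auto.
Qed.

Lemma subterm_at_subst_inv (s : nat -> term) t q u :
  subterm_at (subst s t) q = Some u ->
  (exists f ts, subterm_at t q = Some (Fun f ts)) \/
  (exists q1 q2 x, q = q1 ++ q2 /\ subterm_at t q1 = Some (Var x) /\ subterm_at (s x) q2 = Some u).
Proof.
  revert t; induction q as [|i q IH]; intros t H.
  - destruct t as [x|f ts]; simpl in *.
    + right. exists [], [], x. auto.
    + left. eauto.
  - destruct t as [x|f ts].
    + right. exists [], (i :: q), x. simpl in *. auto.
    + simpl in H. rewrite nth_error_map in H.
      destruct (nth_error ts i) eqn:E; [|discriminate]. simpl in H.
      destruct (IH _ H) as [[g [us Hg]]|[q1 [q2 [x [-> [H1 H2]]]]]].
      * left. exists g, us. simpl. rewrite E. auto.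
      * right. exists (i :: q1), q2, x. simpl. rewrite E. auto.
Qed.

Lemma in_vars_subterm_at t x : In x (vars t) <-> exists q, subterm_at t q = Some (Var x).
Proof.
  split.
  - induction t as [y|f ts IH] using term_nested_ind; simpl; intros Hx.
    + destruct Hx as [->|[]]. exists []. auto.
    + apply in_flat_map in Hx. destruct Hx as [a [Ha Hxa]].
      rewrite Forall_forall in IH. destruct (IH a Ha Hxa) as [q Hq].
      destruct (In_nth_error _ _ Ha) as [i Hi].
      exists (i :: q). simpl. rewrite Hi. auto.
  - intros [q Hq]. revert t Hq. induction q as [|i q IH]; intros t Hq; simpl in Hq.
    + injection Hq; intros; subst; simpl; auto.
    + destruct t as [y|f ts]; [discriminate|].
      destruct (nth_error ts i) eqn:E; [|discriminate].
      simpl. apply in_flat_map. exists t. split; eauto. eapply nth_error_In; eauto.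
Qed.

Lemma vars_subterm_at t q u x : subterm_at t q = Some u -> In x (vars u) -> In x (vars t).
Proof.
  intros H Hx. apply in_vars_subterm_at in Hx. destruct Hx as [q' Hq'].
  apply in_vars_subterm_at. exists (q ++ q'). rewrite (subterm_at_app_Some _ _ _ _ H). auto.
Qed.

Lemma subterm_at_replace_at_sibling t i j (a b : pos) x y v :
  i <> j -> subterm_at t (i :: a) = Some x -> subterm_at t (j :: b) = Some y ->
  subterm_at (replace_at t (i :: a) v) (j :: b) = Some y.
Proof.
  intros Hij Hx Hy. destruct t as [z|f ts]; [discriminate|]. simpl in *.
  destruct (nth_error ts i) eqn:Ei; [|discriminate].
  rewrite nth_error_set_nth_neq; auto.
Qed.

Lemma replace_at_sibling_comm t i j (a b : pos) x y v w :
  i <> j -> subterm_at t (i :: a) = Some x -> subterm_at t (j :: b) = Some y ->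
  replace_at (replace_at t (i :: a) v) (j :: b) w = replace_at (replace_at t (j :: b) w) (i :: a) v.
Proof.
  intros Hij Hx Hy. destruct t as [z|f ts]; [discriminate|]. simpl in *.
  destruct (nth_error ts i) as [ti|] eqn:Ei; [|discriminate].
  destruct (nth_error ts j) as [tj|] eqn:Ej; [|discriminate].
  rewrite (nth_error_nth _ _ _ Ei), (nth_error_nth _ _ _ Ej).
  rewrite (nth_error_nth (set_nth ts i _) j (x := tj)) by (rewrite nth_error_set_nth_neq; auto).
  rewrite (nth_error_nth (set_nth ts j _) i (x := ti)) by (rewrite nth_error_set_nth_neq; auto).
  f_equal. apply set_nth_comm; auto.
Qed.

Lemma subterm_at_replace_at_parallel t (c : pos) i j (a b : pos) x y v :
  i <> j -> subterm_at t (c ++ i :: a) = Some x -> subterm_at t (c ++ j :: b) = Some y ->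
  subterm_at (replace_at t (c ++ i :: a) v) (c ++ j :: b) = Some y.
Proof.
  intros Hij Hx Hy. rewrite subterm_at_app in Hx, Hy.
  destruct (subterm_at t c) as [tc|] eqn:Ec; [|discriminate].
  rewrite (replace_at_app _ _ _ _ _ Ec). rewrite (subterm_at_app_Some _ _ _ _ (subterm_at_replace_at _ _ _ _ Ec)).
  eapply subterm_at_replace_at_sibling; eauto.
Qed.

Lemma replace_at_parallel_comm t (c : pos) i j (a b : pos) x y v w :
  i <> j -> subterm_at t (c ++ i :: a) = Some x -> subterm_at t (c ++ j :: b) = Some y ->
  replace_at (replace_at t (c ++ i :: a) v) (c ++ j :: b) w =
  replace_at (replace_at t (c ++ j :: b) w) (c ++ i :: a) v.
Proof.
  intros Hij Hx Hy. rewrite subterm_at_app in Hx, Hy.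
  destruct (subterm_at t c) as [tc|] eqn:Ec; [|discriminate].
  rewrite !(replace_at_app _ _ _ _ _ Ec).
  rewrite !(replace_at_app _ _ _ _ _ (subterm_at_replace_at _ _ _ _ Ec)).
  rewrite !(replace_at_twice _ _ _ _ _ Ec).
  f_equal. eapply replace_at_sibling_comm; eauto.
Qed.

Lemma pos_prefix_or_parallel (p1 p2 : pos) :
  (exists q, p2 = p1 ++ q) \/ (exists q, p1 = p2 ++ q) \/
  (exists (c : pos) i j (a b : pos), i <> j /\ p1 = c ++ i :: a /\ p2 = c ++ j :: b).
Proof.
  revert p2; induction p1 as [|i p1 IH]; intros p2.
  - left. exists p2. auto.
  - destruct p2 as [|j p2].
    + right; left. exists (i :: p1). auto.
    + destruct (Nat.eq_dec i j) as [<-|Hij].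
      * destruct (IH p2) as [[q ->]|[[q ->]|[c [i' [j' [a [b [H [-> ->]]]]]]]]].
        -- left. exists q. auto.
        -- right; left. exists q. auto.
        -- right; right. exists (i :: c), i', j', a, b. auto.
      * right; right. exists [], i, j, p1, p2. auto.
Qed.

Definition upd (s : nat -> term) x u : nat -> term :=
  fun y => if Nat.eq_dec y x then u else s y.

Lemma set_nth_map_subst_upd (s : nat -> term) x u (ts : list term) i a :
  NoDup (flat_map vars ts) -> nth_error ts i = Some a -> In x (vars a) ->
  set_nth (map (subst s) ts) i (subst (upd s x u) a) = map (subst (upd s x u)) ts.
Proof.
  revert i; induction ts as [|b ts IH]; intros [|i]; simpl; intros Hnd Hi Hx; try discriminate.
  - injection Hi; intros; subst. f_equal. apply map_ext_in. intros c Hc.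
    apply subst_ext. intros y Hy. unfold upd. destruct (Nat.eq_dec y x) as [->|]; auto.
    exfalso. eapply (NoDup_app_disj _ _ x Hnd); auto. apply in_flat_map; eauto.
  - f_equal.
    + apply subst_ext. intros y Hy. unfold upd. destruct (Nat.eq_dec y x) as [->|]; auto.
      exfalso. eapply (NoDup_app_disj _ _ x Hnd); auto. apply in_flat_map.
      exists a. split; auto. eapply nth_error_In; eauto.
    + apply IH; auto. eapply NoDup_app_remove_l; eauto.
Qed.

Lemma replace_at_subst_linear l q x (s : nat -> term) u :
  NoDup (vars l) -> subterm_at l q = Some (Var x) ->
  replace_at (subst s l) q u = subst (upd s x u) l.
Proof.
  revert l; induction q as [|i q IH]; intros l Hnd Hq; simpl in Hq.
  - injection Hq; intros; subst. simpl. unfold upd. destruct (Nat.eq_dec x x); congruence.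
  - destruct l as [y|f ts]; [discriminate|].
    destruct (nth_error ts i) as [t|] eqn:E; [|discriminate]. simpl.
    rewrite (nth_error_nth (map (subst s) ts) i (x := subst s t)) by (rewrite nth_error_map, E; reflexivity).
    simpl in Hnd. f_equal.
    assert (Hnd' : NoDup (vars t)).
    { clear -Hnd E. revert i E Hnd; induction ts as [|b ts IH]; intros [|i] E Hnd; simpl in *;
        try discriminate.
      - injection E; intros; subst. eapply NoDup_app_remove_r; eauto.
      - eapply IH; eauto. eapply NoDup_app_remove_l; eauto. }
    rewrite (IH t Hnd' Hq). apply set_nth_map_subst_upd; auto.
    apply in_vars_subterm_at. eauto.
Qed.

Definition ctx_closed (T : relation term) :=
  forall a b u p v, T a b -> subterm_at u p = Some v -> T (replace_at u p a) (replace_at u p b).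
Definition subst_closed (T : relation term) :=
  forall a b (s : nat -> term), T a b -> T (subst s a) (subst s b).

Lemma rstep_ctx E : ctx_closed (rstep E).
Proof.
  intros a b u p v [q [l [r [s [Hlr [Hq ->]]]]]] Hp.
  exists (p ++ q), l, r, s. split; auto. split.
  - rewrite (subterm_at_app_Some _ _ _ _ (subterm_at_replace_at _ _ _ a Hp)). auto.
  - rewrite (replace_at_app _ _ _ _ _ (subterm_at_replace_at _ _ _ a Hp)). rewrite (replace_at_twice _ _ _ _ _ Hp). auto.
Qed.

Lemma rstep_subst E : subst_closed (rstep E).
Proof.
  intros a b s [q [l [r [s' [Hlr [Hq ->]]]]]].
  exists q, l, r, (fun x => subst s (s' x)). split; auto. split.
  - rewrite <- subst_subst. apply subterm_at_subst; auto.
  - rewrite <- subst_subst. apply subst_replace_at with (u := subst s' l); auto.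
Qed.

Lemma rstep_root E l r (s : nat -> term) : E l r -> rstep E (subst s l) (subst s r).
Proof. intros H. exists [], l, r, s. simpl. auto. Qed.

Lemma rstep_at E w p l r sg : E l r -> subterm_at w p = Some (subst sg l) ->
  rstep E w (replace_at w p (subst sg r)).
Proof. intros; exists p, l, r, sg; auto. Qed.


Lemma rstep_rule E l r : E l r -> rstep E l r.
Proof. intros H. rewrite <- (subst_id l), <- (subst_id r). apply rstep_root; auto. Qed.

Lemma rt_ctx_closed T : ctx_closed T -> ctx_closed (clos_refl_trans _ T).
Proof.
  intros HT a b u p v H Hp. induction H.
  - apply rt_step; eauto.
  - apply rt_refl.
  - eapply rt_trans; eauto.
Qed.

Lemma rt_subst_closed T : subst_closed T -> subst_closed (clos_refl_trans _ T).
Proof.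
  intros HT a b s H. induction H; [apply rt_step; auto|apply rt_refl|eapply rt_trans; eauto].
Qed.

Lemma sym_ctx_closed T : ctx_closed T -> ctx_closed (fun a b => T a b \/ T b a).
Proof. intros HT a b u p v [H|H] Hp; [left|right]; eauto. Qed.

Lemma sym_subst_closed T : subst_closed T -> subst_closed (fun a b => T a b \/ T b a).
Proof. intros HT a b s [H|H]; [left|right]; eauto. Qed.

Lemma conv_step_ctx E : ctx_closed (conv_step E).
Proof. apply sym_ctx_closed, rstep_ctx. Qed.
Lemma conv_step_subst E : subst_closed (conv_step E).
Proof. apply sym_subst_closed, rstep_subst. Qed.
Lemma conv_ctx E : ctx_closed (conv E).
Proof. apply rt_ctx_closed, conv_step_ctx. Qed.
Lemma conv_subst E : subst_closed (conv E).
Proof. apply rt_subst_closed, conv_step_subst. Qed.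
Lemma rsteps_ctx E : ctx_closed (rsteps E).
Proof. apply rt_ctx_closed, rstep_ctx. Qed.
Lemma conv_sym E a b : conv E a b -> conv E b a.
Proof.
  intros H; induction H.
  - apply rt_step. destruct H; [right|left]; auto.
  - apply rt_refl.
  - eapply rt_trans; eauto.
Qed.

Lemma simB_sym B a b : simB B a b -> simB B b a.
Proof. apply conv_sym. Qed.
Lemma simB_refl B a : simB B a a.
Proof. apply rt_refl. Qed.

Lemma rstep_incl_closed E (T : relation term) :
  ctx_closed T -> subst_closed T -> (forall l r, E l r -> T l r) ->
  forall a b, rstep E a b -> T a b.
Proof.
  intros HC HS HE a b [p [l [r [s [Hlr [Hp ->]]]]]].
  rewrite <- (replace_at_subterm_at _ _ _ Hp) at 1. eapply HC; eauto.
Qed.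

Lemma rstep_mono E1 E2 : (forall l r, E1 l r -> E2 l r) -> forall a b, rstep E1 a b -> rstep E2 a b.
Proof. intros H a b [p [l [r [s [Hlr Hr]]]]]. exists p, l, r, s. auto. Qed.

Lemma rstep_union E1 E2 a b : rstep (runion E1 E2) a b <-> rstep E1 a b \/ rstep E2 a b.
Proof.
  split.
  - intros [p [l [r [s [[H|H] Hr]]]]]; [left|right]; exists p, l, r, s; auto.
  - intros [H|H]; revert H; apply rstep_mono; intros l r H; [left|right]; auto.
Qed.

Lemma rstep_converse E a b : rstep E a b -> rstep (fun l r => E r l) b a.
Proof.
  intros [p [l [r [s [Hlr [Hp ->]]]]]].
  exists p, r, l, s. split; auto. split.
  - eapply subterm_at_replace_at; eauto.
  - rewrite (replace_at_twice _ _ _ _ _ Hp). symmetry. eapply replace_at_subterm_at; eauto.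
Qed.

Lemma rstep_sym_rules E a b : rstep (sym_rules E) a b <-> conv_step E a b.
Proof.
  split.
  - intros [p [l [r [s [[H|H] Hr]]]]].
    + left. exists p, l, r, s; auto.
    + right. apply (rstep_converse (fun l r => E r l)). exists p, l, r, s; auto.
  - intros [H|H].
    + revert H. apply rstep_mono. intros l r H; left; auto.
    + apply rstep_converse in H. revert H. apply rstep_mono. intros l r H; right; auto.
Qed.

Definition child_closed (T : relation term) :=
  forall f pre post a b, T a b -> T (Fun f (pre ++ a :: post)) (Fun f (pre ++ b :: post)).

Lemma ctx_closed_child_closed T : ctx_closed T -> child_closed T.
Proof.
  intros HC f pre post a b H.
  assert (Hs : subterm_at (Fun f (pre ++ a :: post)) [length pre] = Some a).
  { simpl. rewrite nth_error_app_len. auto. }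
  pose proof (HC a b _ _ _ H Hs) as H'. simpl in H'.
  rewrite !set_nth_app in H'. auto.
Qed.

Lemma rt_args T f us vs : child_closed T ->
  Forall2 (clos_refl_trans _ T) us vs -> clos_refl_trans _ T (Fun f us) (Fun f vs).
Proof.
  intros HC H. cut (forall pre, clos_refl_trans _ T (Fun f (pre ++ us)) (Fun f (pre ++ vs))).
  { intros Hc. apply (Hc []). }
  induction H as [|a b us vs Hab Hrest IH]; intros pre; [apply rt_refl|].
  eapply rt_trans with (y := Fun f (pre ++ b :: us)).
  - clear -HC Hab. induction Hab.
    + apply rt_step. apply HC. auto.
    + apply rt_refl.
    + eapply rt_trans; eauto.
  - specialize (IH (pre ++ [b])). rewrite <- !app_assoc in IH. simpl in IH. auto.
Qed.

Lemma rt_subst_pointwise T (s s' : nat -> term) t : child_closed T ->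
  (forall x, clos_refl_trans _ T (s x) (s' x)) -> clos_refl_trans _ T (subst s t) (subst s' t).
Proof.
  intros HC Hs. induction t as [x|f ts IH] using term_nested_ind; simpl; auto.
  apply rt_args; auto. induction ts as [|a ts IHts]; simpl; constructor.
  - inversion IH; auto.
  - apply IHts. inversion IH; auto.
Qed.

Lemma rt_replace_at_var_upd T l q x (s : nat -> term) u : child_closed T ->
  subterm_at l q = Some (Var x) -> clos_refl_trans _ T (s x) u ->
  clos_refl_trans _ T (replace_at (subst s l) q u) (subst (upd s x u) l).
Proof.
  intros HC. revert l. induction q as [|i q IH]; intros l Hq Hu; simpl in Hq.
  - injection Hq; intros; subst. simpl. unfold upd. destruct (Nat.eq_dec x x); [apply rt_refl|congruence].
  - destruct l as [y|f ts]; [discriminate|].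
    destruct (nth_error ts i) as [t|] eqn:E; [|discriminate]. simpl.
    rewrite (nth_error_nth (map (subst s) ts) i (x := subst s t)) by (rewrite nth_error_map, E; reflexivity).
    apply rt_args; auto.
    assert (Hall : forall c, clos_refl_trans _ T (subst s c) (subst (upd s x u) c)).
    { intros c. apply rt_subst_pointwise; auto. intros y. unfold upd.
      destruct (Nat.eq_dec y x) as [->|]; auto. apply rt_refl. }
    clear -IH Hq E Hall Hu. revert i E. induction ts as [|b ts IHts]; intros [|i] E; simpl in *; try discriminate.
    + injection E; intros; subst. constructor; [apply IH; auto|].
      clear IHts E. induction ts; simpl; constructor; auto.
    + constructor; auto.
Qed.

Lemma parallel_steps_commute E1 E2 w (P1 P2 : pos) l1 r1 (s1 : nat -> term) l2 r2 (s2 : nat -> term) :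
  (exists (c0 : pos) i j (a0 b0 : pos), i <> j /\ P1 = c0 ++ i :: a0 /\ P2 = c0 ++ j :: b0) ->
  E1 l1 r1 -> subterm_at w P1 = Some (subst s1 l1) ->
  E2 l2 r2 -> subterm_at w P2 = Some (subst s2 l2) ->
  exists v, rstep E2 (replace_at w P1 (subst s1 r1)) v /\ rstep E1 (replace_at w P2 (subst s2 r2)) v.
Proof.
  intros [c0 [i [j [a0 [b0 [Hij [-> ->]]]]]]] H1 Hp1 H2 Hp2.
  exists (replace_at (replace_at w (c0 ++ i :: a0) (subst s1 r1)) (c0 ++ j :: b0) (subst s2 r2)). split.
  - apply rstep_at with (l := l2); auto. eapply subterm_at_replace_at_parallel; eauto.
  - rewrite (replace_at_parallel_comm _ _ _ _ _ _ _ _ _ _ Hij Hp1 Hp2).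
    apply rstep_at with (l := l1); auto. eapply subterm_at_replace_at_parallel; eauto.
Qed.


End Terms.

Section Unification.
Context {F : Type}.
Local Notation term := (term F).
Local Notation equations := (list (term * term)).
Implicit Types (t u v w a b c : term) (eqs rest : equations).

Fixpoint size t : nat :=
  match t with
  | Var _ => 1
  | Fun _ ts => S (list_sum (map size ts))
  end.

Lemma size_pos t : 1 <= size t.
Proof. destruct t; simpl; lia. Qed.

Lemma size_arg_lt f ts t : In t ts -> size t < size (Fun f ts).
Proof.
  simpl. induction ts as [|u ts IH]; simpl; intros H; [contradiction|].
  destruct H as [->|H]; [lia|]. specialize (IH H). lia.
Qed.

Lemma size_var_le (s : nat -> term) t x : In x (vars t) -> size (s x) <= size (subst s t).
Proof.
  induction t as [y|f ts IH] using term_nested_ind; simpl; intros Hx.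
  - destruct Hx as [->|[]]; auto.
  - apply in_flat_map in Hx. destruct Hx as [a [Ha Hxa]].
    rewrite Forall_forall in IH. specialize (IH a Ha Hxa).
    assert (size (subst s a) < size (Fun f (map (subst s) ts))) by (apply size_arg_lt, in_map; auto).
    simpl in *. lia.
Qed.

Lemma size_subst_occurs (s : nat -> term) x b :
  In x (vars b) -> b <> Var x -> size (s x) < size (subst s b).
Proof.
  intros Hx Hb. destruct b as [y|f ts].
  - simpl in Hx. destruct Hx as [->|[]]. congruence.
  - simpl in Hx. apply in_flat_map in Hx. destruct Hx as [a [Ha Hxa]].
    pose proof (size_var_le s a x Hxa).
    assert (size (subst s a) < size (Fun f (map (subst s) ts))) by (apply size_arg_lt, in_map; auto).
    simpl in *. lia.
Qed.

Definition unifies (s : nat -> term) eqs :=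
  Forall (fun p => subst s (fst p) = subst s (snd p)) eqs.
Definition mgu_of (s : nat -> term) eqs :=
  unifies s eqs /\ forall tau, unifies tau eqs -> exists rho, forall x, tau x = subst rho (s x).
Definition eqs_vars eqs := flat_map (fun p => vars (fst p) ++ vars (snd p)) eqs.
Definition num_vars eqs := length (nodup Nat.eq_dec (eqs_vars eqs)).
Definition eqs_size eqs := list_sum (map (fun p => size (fst p) + size (snd p)) eqs).
Definition subst_eqs (th : nat -> term) eqs := map (fun p => (subst th (fst p), subst th (snd p))) eqs.

Lemma unifies_cons (s : nat -> term) a b rest :
  unifies s ((a, b) :: rest) <-> subst s a = subst s b /\ unifies s rest.
Proof. split; [intros H; inversion H; auto|intros [H1 H2]; constructor; auto]. Qed.

Lemma mgu_of_equiv {s : nat -> term} {eqs eqs'} :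
  (forall tau, unifies tau eqs <-> unifies tau eqs') -> mgu_of s eqs' -> mgu_of s eqs.
Proof. intros Heq [Hs Hmg]. split; [apply Heq; auto|intros tau Htau; apply Hmg, Heq, Htau]. Qed.

Lemma eqs_vars_cons a b rest y :
  In y (eqs_vars ((a, b) :: rest)) <-> In y (vars a) \/ In y (vars b) \/ In y (eqs_vars rest).
Proof. unfold eqs_vars; simpl. rewrite !in_app_iff. tauto. Qed.

Lemma num_vars_incl eqs eqs' : incl (eqs_vars eqs) (eqs_vars eqs') -> num_vars eqs <= num_vars eqs'.
Proof.
  intros H. apply NoDup_incl_length; [apply NoDup_nodup|].
  intros y Hy. apply nodup_In. apply nodup_In in Hy. auto.
Qed.

Lemma num_vars_lt eqs eqs' x : incl (eqs_vars eqs) (eqs_vars eqs') ->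
  In x (eqs_vars eqs') -> ~ In x (eqs_vars eqs) -> num_vars eqs < num_vars eqs'.
Proof.
  intros H Hx Hn. unfold num_vars.
  enough (length (x :: nodup Nat.eq_dec (eqs_vars eqs)) <= length (nodup Nat.eq_dec (eqs_vars eqs')))
    by (simpl in *; lia).
  apply NoDup_incl_length.
  - constructor; [rewrite nodup_In; auto|apply NoDup_nodup].
  - intros y [<-|Hy]; apply nodup_In; auto. apply nodup_In in Hy. auto.
Qed.

Lemma unifies_subst_eqs (tau th : nat -> term) eqs :
  unifies tau (subst_eqs th eqs) <-> unifies (fun y => subst tau (th y)) eqs.
Proof.
  induction eqs as [|[a b] eqs IH]; simpl; [split; constructor|].
  rewrite !unifies_cons, IH, !subst_subst. tauto.
Qed.

Lemma eqs_vars_subst_eqs (th : nat -> term) eqs y : In y (eqs_vars (subst_eqs th eqs)) ->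
  exists z, In z (eqs_vars eqs) /\ In y (vars (th z)).
Proof.
  induction eqs as [|[a b] eqs IH]; simpl; [contradiction|].
  intros Hy. apply eqs_vars_cons in Hy.
  destruct Hy as [Hy|[Hy|Hy]]; [apply vars_subst in Hy..|apply IH in Hy];
    destruct Hy as [z [Hz Hyz]]; exists z; split; auto; apply eqs_vars_cons; auto.
Qed.

Lemma unifies_ext (s s' : nat -> term) eqs : (forall y, s y = s' y) -> unifies s eqs -> unifies s' eqs.
Proof.
  intros H. apply Forall_impl. intros p Hp.
  rewrite <- !(subst_ext s s') by auto. exact Hp.
Qed.

Lemma upd_var_elim {tau : nat -> term} {x b} :
  subst tau (Var x) = subst tau b -> forall z, subst tau (upd Var x b z) = tau z.
Proof. intros H z. unfold upd. destruct (Nat.eq_dec z x) as [->|]; auto. Qed.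

Lemma unifies_var_elim {tau : nat -> term} {x b rest} :
  unifies tau ((Var x, b) :: rest) -> unifies tau (subst_eqs (upd Var x b) rest).
Proof.
  intros [Hxb Hrest]%unifies_cons. apply unifies_subst_eqs.
  apply (unifies_ext tau); auto. intros z. symmetry. apply upd_var_elim, Hxb.
Qed.

Lemma num_vars_var_elim x b rest : ~ In x (vars b) ->
  num_vars (subst_eqs (upd Var x b) rest) < num_vars ((Var x, b) :: rest).
Proof.
  intros Hx. apply num_vars_lt with x.
  - intros y Hy. apply eqs_vars_subst_eqs in Hy. destruct Hy as [z [Hz Hyz]].
    apply eqs_vars_cons. unfold upd in Hyz. destruct (Nat.eq_dec z x) as [->|]; auto.
    destruct Hyz as [->|[]]. auto.
  - apply eqs_vars_cons. left. left. reflexivity.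
  - intros Hy. apply eqs_vars_subst_eqs in Hy. destruct Hy as [z [_ Hxz]].
    unfold upd in Hxz. destruct (Nat.eq_dec z x) as [->|Hzx]; [contradiction|].
    destruct Hxz as [->|[]]. congruence.
Qed.

Lemma mgu_of_var_elim x b rest (s : nat -> term) : ~ In x (vars b) ->
  mgu_of s (subst_eqs (upd Var x b) rest) ->
  mgu_of (fun y => subst s (upd Var x b y)) ((Var x, b) :: rest).
Proof.
  intros Hx [Hs Hmg]. split.
  - apply unifies_cons. split; [|apply unifies_subst_eqs, Hs].
    simpl. unfold upd at 1. destruct (Nat.eq_dec x x) as [_|]; [|congruence].
    rewrite <- subst_subst. f_equal. rewrite <- (subst_id b) at 1. apply subst_ext.
    intros z Hz. unfold upd. destruct (Nat.eq_dec z x) as [->|]; [contradiction|reflexivity].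
  - intros tau Htau. destruct (Hmg tau (unifies_var_elim Htau)) as [rho Hrho].
    exists rho. intros y. apply unifies_cons in Htau as [Hxb _].
    rewrite <- (upd_var_elim Hxb y), subst_subst. apply subst_ext. auto.
Qed.

Lemma mgu_of_var {x b rest} {tau : nat -> term} : unifies tau ((Var x, b) :: rest) -> b <> Var x ->
  (forall eqs', num_vars eqs' < num_vars ((Var x, b) :: rest) -> unifies tau eqs' ->
     exists s, mgu_of s eqs') ->
  exists s, mgu_of s ((Var x, b) :: rest).
Proof.
  intros Htau Hb IH.
  assert (Hx : ~ In x (vars b)).
  { intros Hx. apply unifies_cons in Htau as [Hxb _].
    pose proof (size_subst_occurs tau _ _ Hx Hb) as Hlt. rewrite <- Hxb in Hlt. simpl in Hlt. lia. }
  destruct (IH _ (num_vars_var_elim x b rest Hx) (unifies_var_elim Htau)) as [s Hs].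
  eexists. apply mgu_of_var_elim; eauto.
Qed.

Lemma num_vars_swap a b rest : num_vars ((b, a) :: rest) = num_vars ((a, b) :: rest).
Proof.
  apply Nat.le_antisymm; apply num_vars_incl; intros y Hy; apply eqs_vars_cons;
    apply eqs_vars_cons in Hy; tauto.
Qed.

Lemma unifies_combine (s : nat -> term) ts us : length ts = length us ->
  (map (subst s) ts = map (subst s) us <-> unifies s (combine ts us)).
Proof.
  revert us; induction ts as [|a ts IH]; intros [|b us] Hl; simpl in *; try discriminate.
  - split; intros; constructor.
  - injection Hl; intros Hl'. rewrite unifies_cons, <- IH by exact Hl'.
    split; [intros H; injection H; auto|intros [-> ->]; reflexivity].
Qed.

Lemma unifies_decompose f ts us rest (tau : nat -> term) : length ts = length us ->
  unifies tau ((Fun f ts, Fun f us) :: rest) <-> unifies tau (combine ts us ++ rest).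
Proof.
  intros Hl. unfold unifies at 2. rewrite Forall_app, unifies_cons. fold (unifies tau (combine ts us)).
  rewrite <- unifies_combine by exact Hl. simpl.
  split; [intros [H ?]; injection H; auto|intros [-> ?]; auto].
Qed.

Lemma eqs_size_decompose f ts us rest : length ts = length us ->
  eqs_size (combine ts us ++ rest) < eqs_size ((Fun f ts, Fun f us) :: rest).
Proof.
  intros Hl. unfold eqs_size. rewrite map_app, list_sum_app. simpl.
  enough (list_sum (map (fun p => size (fst p) + size (snd p)) (combine ts us)) =
          list_sum (map size ts) + list_sum (map size us)) by lia.
  revert us Hl; induction ts as [|a ts IH]; intros [|b us] Hl; simpl in *; try discriminate; auto.
  rewrite IH by lia. lia.
Qed.

Lemma num_vars_decompose f ts us rest :
  num_vars (combine ts us ++ rest) <= num_vars ((Fun f ts, Fun f us) :: rest).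
Proof.
  apply num_vars_incl. intros y Hy. unfold eqs_vars in Hy.
  rewrite flat_map_app, in_app_iff in Hy. apply eqs_vars_cons. simpl.
  destruct Hy as [Hy|Hy]; [|auto].
  revert us Hy; induction ts as [|a ts IH]; intros [|b us]; simpl; try contradiction.
  rewrite !in_app_iff. intros [[Hy|Hy]|Hy]; auto.
  destruct (IH us Hy) as [H|[H|H]]; auto.
Qed.

Lemma mgu_of_exists_bounded n : forall m eqs, num_vars eqs <= n -> eqs_size eqs <= m ->
  forall tau, unifies tau eqs -> exists s, mgu_of s eqs.
Proof.
  induction n as [n IHn] using (well_founded_induction lt_wf).
  intros m. induction m as [|m IHm]; intros [|[a b] rest] Hn Hm tau Htau;
    try solve [exists Var; split; [constructor|intros tau' _; exists tau'; reflexivity]].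
  { unfold eqs_size in Hm. simpl in Hm. pose proof (size_pos a). lia. }
  assert (IHvars : forall eqs', num_vars eqs' < num_vars ((a, b) :: rest) ->
            forall tau', unifies tau' eqs' -> exists s, mgu_of s eqs').
  { intros eqs' Hlt. apply (IHn (num_vars eqs')) with (eqs_size eqs'); lia. }
  assert (IHsize : forall eqs', num_vars eqs' <= num_vars ((a, b) :: rest) ->
            eqs_size eqs' < eqs_size ((a, b) :: rest) ->
            forall tau', unifies tau' eqs' -> exists s, mgu_of s eqs').
  { intros eqs' Hle Hlt. apply IHm; lia. }
  destruct a as [x|f ts]; [|destruct b as [y|g us]].
  - destruct (classic (b = Var x)) as [->|Hb].
    + assert (Hdel : forall tt, unifies tt ((Var x, Var x) :: rest) <-> unifies tt rest).
      { intros tt. rewrite unifies_cons. tauto. }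
      destruct (IHsize rest) with tau as [s Hs].
      * apply num_vars_incl. intros z Hz. apply eqs_vars_cons. auto.
      * unfold eqs_size. simpl. lia.
      * apply Hdel, Htau.
      * exists s. apply (mgu_of_equiv Hdel Hs).
    + apply (mgu_of_var Htau Hb). intros eqs' Hlt. apply IHvars; auto.
  - assert (Hswap : forall tt, unifies tt ((Fun f ts, Var y) :: rest) <->
                               unifies tt ((Var y, Fun f ts) :: rest)).
    { intros tt. rewrite !unifies_cons. intuition. }
    destruct (mgu_of_var (proj1 (Hswap tau) Htau) ltac:(discriminate)) as [s Hs].
    + intros eqs' Hlt. apply IHvars. rewrite <- num_vars_swap. exact Hlt.
    + exists s. apply (mgu_of_equiv Hswap Hs).
  - destruct (classic (f = g /\ length ts = length us)) as [[<- Hl]|Hfg].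
    + destruct (IHsize (combine ts us ++ rest)) with tau as [s Hs].
      * apply num_vars_decompose.
      * apply eqs_size_decompose, Hl.
      * apply (unifies_decompose f ts us rest tau Hl), Htau.
      * exists s. apply (mgu_of_equiv (fun tt => unifies_decompose f ts us rest tt Hl) Hs).
    + exfalso. apply unifies_cons in Htau as [Hfu _]. simpl in Hfu. injection Hfu as <- Hm'.
      apply Hfg. split; auto. rewrite <- (length_map (subst tau) ts), Hm'. apply length_map.
Qed.

Lemma mgu_exists (u v : term) (tau : nat -> term) : subst tau u = subst tau v -> exists s, mgu s u v.
Proof.
  intros H.
  assert (Huv : forall s, unifies s [(u, v)] <-> subst s u = subst s v).
  { intros s. rewrite unifies_cons. split; [tauto|split; [auto|constructor]]. }
  destruct (mgu_of_exists_bounded _ _ [(u, v)] (le_n _) (le_n _) tau) as [s [Hs Hmg]];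
    [apply Huv, H|].
  exists s. split; [apply Huv, Hs|]. intros tt Htt. apply Hmg, Huv, Htt.
Qed.
End Unification.

Section Renaming.
Context {F : Type}.
Local Notation term := (term F).
Local Notation rename rho := (fun x => Var (rho x) : term).

Definition swapN (N x : nat) := if x <? N then x + N else if x <? N + N then x - N else x.

Lemma swapN_inv N x : swapN N (swapN N x) = x.
Proof.
  unfold swapN.
  repeat match goal with |- context [?a <? ?b] => destruct (Nat.ltb_spec a b) end; lia.
Qed.

Lemma rename_apart (l r : term) (V : list nat) (so si : nat -> term) :
  exists (rho : nat -> nat) (tau : nat -> term), renaming rho /\
    (forall x, In x (vars (subst (rename rho) l) ++ vars (subst (rename rho) r)) -> ~ In x V) /\
    subst tau (subst (rename rho) l) = subst si l /\
    subst tau (subst (rename rho) r) = subst si r /\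
    (forall x, In x V -> tau x = so x).
Proof.
  set (N := S (list_max (vars l ++ vars r ++ V))).
  assert (HN : forall x, In x (vars l ++ vars r ++ V) -> x < N).
  { intros x Hx. apply le_n_S. pose proof (proj1 (list_max_le (vars l ++ vars r ++ V) _) (le_n _)) as Hmax.
    rewrite Forall_forall in Hmax. exact (Hmax x Hx). }
  assert (Hshift : forall x, x < N -> swapN N x = x + N).
  { intros x Hx. unfold swapN. destruct (Nat.ltb_spec x N); lia. }
  set (tau x := if x <? N then so x else si (swapN N x)).
  assert (Hren : forall t, (forall x, In x (vars t) -> x < N) ->
            subst tau (subst (rename (swapN N)) t) = subst si t).
  { intros t Ht. rewrite subst_subst. apply subst_ext. intros x Hx. simpl. unfold tau.
    rewrite (Hshift x (Ht x Hx)). destruct (Nat.ltb_spec (x + N) N); [lia|].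
    rewrite <- (Hshift x (Ht x Hx)), swapN_inv. reflexivity. }
  exists (swapN N), tau. split; [exists (swapN N); split; intros; apply swapN_inv|].
  split; [|split; [|split]].
  - intros x Hx HxV. assert (x < N) by (apply HN; rewrite !in_app_iff; auto).
    rewrite in_app_iff in Hx. destruct Hx as [Hx|Hx]; apply vars_subst in Hx;
      destruct Hx as [z [Hz [<-|[]]]];
      (assert (z < N) by (apply HN; rewrite !in_app_iff; auto)); rewrite Hshift in *; lia.
  - apply Hren. intros x Hx. apply HN. rewrite !in_app_iff. auto.
  - apply Hren. intros x Hx. apply HN. rewrite !in_app_iff. auto.
  - intros x Hx. unfold tau. assert (x < N) by (apply HN; rewrite !in_app_iff; auto).
    destruct (Nat.ltb_spec x N); [reflexivity|lia].
Qed.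

Lemma is_variant_subst_eq (l1 r1 l2 r2 : term) (tau : nat -> term) :
  is_variant l1 r1 l2 r2 -> (forall x, In x (vars r2) -> In x (vars l2)) ->
  subst tau l1 = subst tau l2 -> subst tau r1 = subst tau r2.
Proof.
  intros [rho [_ [-> ->]]] Hvars Hl. rewrite subst_subst in *. apply subst_ext.
  intros x Hx. apply (subst_ext_inv _ _ l2 Hl), Hvars, Hx.
Qed.

End Renaming.

Section Modulo.
Context {F : Type}.
Local Notation term := (term F).
Implicit Types (t u v w a b c d s : term).
Variables (B : rules F) (gt : relation term).
Hypothesis gt_order : B_compatible_reduction_order B gt.

Lemma gt_trans x y z : gt x y -> gt y z -> gt x z.
Proof. destruct gt_order as (?&?&?&?&?&?); eauto. Qed.
Lemma gt_irr x : ~ gt x x.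
Proof. destruct gt_order as (?&?&?&?&?&?); auto. Qed.
Lemma gt_wf : well_founded (fun x y => gt y x).
Proof. destruct gt_order as (?&?&?&?&?&?); auto. Qed.
Lemma gt_ctx : ctx_closed gt.
Proof. destruct gt_order as (?&?&?&?&?&?); auto. Qed.
Lemma gt_subst : subst_closed gt.
Proof. destruct gt_order as (?&?&?&?&?&?); auto. Qed.
Lemma gt_compat s s' t' t : simB B s s' -> gt s' t' -> simB B t' t -> gt s t.
Proof. destruct gt_order as (?&?&?&?&?&?); eauto. Qed.
#[local] Hint Resolve gt_trans gt_irr gt_wf gt_ctx gt_subst gt_compat : core.

Lemma gt_simB_l a b c : simB B a b -> gt b c -> gt a c.
Proof. intros; eapply gt_compat; eauto. apply simB_refl. Qed.

Lemma gt_simB_r a b c : gt a b -> simB B b c -> gt a c.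
Proof. intros; eapply gt_compat; eauto. apply simB_refl. Qed.

Lemma simB_not_gt a b : simB B a b -> gt a b -> False.
Proof. intros H1 H2. apply (gt_irr b). eapply gt_compat; eauto. apply simB_sym; auto. apply simB_refl. Qed.

Lemma no_infinite_gt_chain : ~ exists f : nat -> term, forall k, gt (f k) (f (S k)).
Proof.
  intros [f Hf].
  assert (H : forall x, Acc (fun x y => gt y x) x -> forall g : nat -> term, g 0 = x -> (forall k, gt (g k) (g (S k))) -> False).
  { intros x Hacc. induction Hacc as [x _ IH]. intros g Hg0 Hg.
    apply (IH (g 1)) with (g := fun k => g (S k)); auto. rewrite <- Hg0; apply Hg. }
  apply (H (f 0) (gt_wf _) f); auto.
Qed.

Lemma rstep_gt (R : rules F) : (forall l r, R l r -> gt l r) -> forall a b, rstep R a b -> gt a b.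
Proof. intros H. apply rstep_incl_closed; auto. Qed.

(* If [x] occurred in [r] but not in [l], then [l > r{x := l}] would contain [l] again and
   iterating this context would give an infinite descending chain. *)
Lemma oriented_vars (R : rules F) : (forall l r, R l r -> gt l r) ->
  forall l r, R l r -> forall x, In x (vars r) -> In x (vars l).
Proof.
  intros HR l r Hlr x Hx. apply NNPP. intros Hn.
  apply in_vars_subterm_at in Hx. destruct Hx as [q Hq].
  set (sg := upd Var x l).
  assert (Hl : subst sg l = l).
  { rewrite <- (subst_id l) at 2. apply subst_ext. intros y Hy. unfold sg, upd.
    destruct (Nat.eq_dec y x) as [->|]; [contradiction|auto]. }
  set (t1 := subst sg r).
  assert (Hq1 : subterm_at t1 q = Some l).
  { unfold t1. rewrite (subterm_at_subst sg _ _ _ Hq). simpl. unfold sg, upd. destruct (Nat.eq_dec x x); congruence. }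
  assert (H1 : gt l t1) by (rewrite <- Hl at 1; apply gt_subst; auto).
  apply no_infinite_gt_chain. exists (fix f k := match k with 0 => l | S k' => replace_at t1 q (f k') end).
  induction k as [|k IH].
  - simpl. rewrite (replace_at_subterm_at _ _ _ Hq1). auto.
  - simpl. apply gt_ctx with (v := l); auto.
Qed.

Lemma rstep_conv (X Y : rules F) : (forall l r, X l r -> conv Y l r) -> forall a b, rstep X a b -> conv Y a b.
Proof. intros H. apply rstep_incl_closed; auto; [apply conv_ctx|apply conv_subst]. Qed.

Lemma conv_incl (X Y : rules F) : (forall a b, rstep X a b -> conv Y a b) -> forall a b, conv X a b -> conv Y a b.
Proof.
  intros H a b Hc. induction Hc.
  - destruct H0; [auto|apply conv_sym; auto].
  - apply rt_refl.
  - eapply rt_trans; eauto.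
Qed.

Lemma inf_step_oriented (s1 s2 : state F) : inf_step B gt s1 s2 ->
  (forall l r, snd s1 l r -> gt l r) -> forall l r, snd s2 l r -> gt l r.
Proof.
  destruct s1 as [E1 R1], s2 as [E2 R2]. simpl. intros HS H.
  destruct HS as [[s [t [u [_ [_ [_ HR]]]]]]|[[s [t [_ [Hgt HR]]]]|[[s [t [_ [_ HR]]]]|
    [[E0 [s [t [u [_ [_ [_ HR]]]]]]]|[[s [t [u [[_ HR] _]]]]|[R0 [s [t [u [[_ HR] [Htu [HR' _]]]]]]]]]]]];
    intros l r Hlr.
  - apply H, HR; auto.
  - apply HR in Hlr. destruct Hlr as [Hlr|[-> ->]]; auto.
  - apply H, HR; auto.
  - apply H, HR; auto.
  - apply H, HR. left; auto.
  - apply HR' in Hlr. destruct Hlr as [Hlr|[-> ->]].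
    + apply H, HR. left; auto.
    + eapply gt_trans; [apply H, HR; right; split; eauto|].
      eapply rstep_gt; [|apply Htu]. intros; apply H, HR; left; auto.
Qed.

Lemma disj_add_incl (X Y : rules F) l r : disj_add X Y l r -> (forall a b, Y a b -> X a b) /\ X l r.
Proof.
  intros [_ H]. split.
  - intros a b Hab. apply H. left; auto.
  - apply H. right. split; auto.
Qed.

Lemma inf_step_sound (E : rules F) (s1 s2 : state F) : inf_step B gt s1 s2 ->
  (forall a b, fst s1 a b \/ snd s1 a b -> conv (runion E B) a b) ->
  forall a b, fst s2 a b \/ snd s2 a b -> conv (runion E B) a b.
Proof.
  destruct s1 as [E1 R1], s2 as [E2 R2]. simpl. intros HS H.
  assert (HRc : forall a b, rstep R1 a b -> conv (runion E B) a b).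
  { apply rstep_conv. intros; apply H; auto. }
  assert (HBc : forall a b, rstep B a b -> conv (runion E B) a b).
  { apply rstep_conv. intros; apply rt_step; left; apply rstep_rule; right; auto. }
  assert (Hsym : forall a b, conv (runion E B) a b -> conv (runion E B) b a) by apply conv_sym.
  assert (HE1 : forall a b, E1 a b \/ E1 b a -> conv (runion E B) a b).
  { intros a b [Hab|Hab]; [|apply Hsym]; apply H; auto. }
  destruct HS as [[s [t [u [Hus [Hut [HE HR]]]]]]|[[s [t [Hd [Hgt HR]]]]|[[s [t [Hd [_ HR]]]]|
    [[E0 [s [t [u [Hd [Hsu [HE HR]]]]]]]|[[s [t [u [Hd [Hsu HE]]]]]|[R0 [s [t [u [Hd [Htu [HR' HE]]]]]]]]]]]];
    intros a b [Hab|Hab].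
  - apply HE in Hab. destruct Hab as [Hab|[-> ->]]; [apply H; auto|].
    eapply rt_trans; [apply Hsym, HRc, Hus|].
    apply rstep_union in Hut. destruct Hut as [Hut|Hut]; [apply HRc; auto|].
    apply rstep_sym_rules in Hut. destruct Hut as [Hut|Hut]; [apply HBc; auto|apply Hsym, HBc; auto].
  - apply HR in Hab. apply H; auto.
  - destruct Hd as [Hd|Hd]; apply disj_add_incl in Hd; apply H; left; apply Hd; auto.
  - apply HR in Hab. destruct Hab as [Hab|[-> ->]]; [apply H; auto|].
    destruct Hd as [Hd|Hd]; apply disj_add_incl in Hd; apply HE1; tauto.
  - apply disj_add_incl in Hd. apply H; left; apply Hd; auto.
  - apply HR in Hab. apply H; auto.
  - apply HE in Hab. destruct Hab as [Hab|[-> ->]].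
    + destruct Hd as [Hd|Hd]; apply disj_add_incl in Hd; apply H; left; apply Hd; auto.
    + eapply rt_trans; [apply Hsym, HRc, Hsu|]. destruct Hd as [Hd|Hd]; apply disj_add_incl in Hd; apply HE1; tauto.
  - apply HR in Hab. apply H; auto.
  - apply HE in Hab. apply disj_add_incl in Hd. destruct Hab as [Hab|[-> ->]]; [apply H; auto|].
    eapply rt_trans; [apply Hsym, HRc|apply H; right; apply Hd].
    revert Hsu. apply rstep_mono. apply Hd.
  - apply disj_add_incl in Hd. apply H. right. apply Hd. auto.
  - apply HE in Hab. apply H; auto.
  - apply disj_add_incl in Hd. apply HR' in Hab. destruct Hab as [Hab|[-> ->]]; [apply H; right; apply Hd; auto|].
    eapply rt_trans; [apply H; right; apply Hd|]. apply HRc. revert Htu. apply rstep_mono. apply Hd.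
Qed.

Section Oriented.
Variable R : rules F.
Hypothesis R_oriented : forall l r, R l r -> gt l r.

Lemma rstep_R_gt a b : rstep R a b -> gt a b.
Proof. apply rstep_gt, R_oriented. Qed.
#[local] Hint Resolve rstep_R_gt : core.

Definition rb_step a b := rstep R a b \/ rstep R b a \/ conv_step B a b.

Inductive rb_path (P : term -> Prop) : term -> term -> Prop :=
| rb_path_refl x : P x -> rb_path P x x
| rb_path_step x y z : P x -> rb_step x y -> rb_path P y z -> rb_path P x z.

Definition joinable := joinable_mod B R.

(* [s] and [t] have a proof below them in the proof ordering: they are ~B-equivalent, or each
   endpoint takes one R-step unless it is already below the other endpoint, and the results are
   connected through terms strictly below [s] or [t]. *)
Definition conv_below s t := simB B s t \/ exists c d,
  (rstep R s c \/ (s = c /\ gt t s)) /\ (rstep R t d \/ (t = d /\ gt s t)) /\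
  rb_path (fun x => gt s x \/ gt t x) c d.

Lemma rb_step_sym a b : rb_step a b -> rb_step b a.
Proof. intros [H|[H|[H|H]]]; unfold rb_step; auto; right; right; [right|left]; auto. Qed.

Lemma rb_path_head P a b : rb_path P a b -> P a.
Proof. intros H; inversion H; auto. Qed.
Lemma rb_path_trans P a b c : rb_path P a b -> rb_path P b c -> rb_path P a c.
Proof. intros H; induction H; intros; auto. econstructor; eauto. Qed.
Lemma rb_path_one P a b : P a -> rb_step a b -> P b -> rb_path P a b.
Proof. intros; econstructor; eauto. constructor; auto. Qed.
Lemma rb_path_sym P a b : rb_path P a b -> rb_path P b a.
Proof.
  intros H; induction H; [constructor; auto|].
  eapply rb_path_trans; eauto. apply rb_path_one; auto. eapply rb_path_head; eauto. apply rb_step_sym; auto.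
Qed.
Lemma rb_path_weaken (P Q : term -> Prop) a b : (forall x, P x -> Q x) -> rb_path P a b -> rb_path Q a b.
Proof. intros HPQ H; induction H; econstructor; eauto. Qed.

Lemma simB_rb_path (P : term -> Prop) a b : simB B a b -> (forall x, simB B a x -> P x) -> rb_path P a b.
Proof.
  intros H. apply clos_rt_rt1n in H. induction H; intros HP.
  - constructor. apply HP, simB_refl.
  - econstructor. apply HP, simB_refl. right; right; eauto.
    apply IHclos_refl_trans_1n. intros x' Hx'. apply HP. eapply rt_trans; [apply rt_step; eauto|auto].
Qed.

Lemma rsteps_rb_path (P : term -> Prop) a b : rsteps R a b -> P a ->
  (forall x y, P x -> rstep R x y -> P y) -> rb_path P a b.
Proof.
  intros H. apply clos_rt_rt1n in H. induction H; intros Ha HP.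
  - constructor; auto.
  - econstructor; eauto. left; auto.
Qed.

Lemma rsteps_ge a b : rsteps R a b -> a = b \/ gt a b.
Proof.
  intros H; induction H; auto.
  destruct IHclos_refl_trans1 as [->|H1]; auto. destruct IHclos_refl_trans2 as [->|H2]; eauto.
Qed.

Section CR.
Hypothesis local_peak : forall w s t, rstep R w s -> rstep R w t -> rb_path (gt w) s t.
Hypothesis local_cliff : forall w s t, rstep R w s -> conv_step B w t -> exists d, rstep R t d /\ rb_path (gt w) d s.

Definition at_most w x := gt w x \/ simB B w x.
Definition paths_joinable_at_most w := forall s t, rb_path (at_most w) s t -> joinable s t.

Lemma joinable_rsteps_l a a' b : rsteps R a a' -> joinable a' b -> joinable a b.
Proof. intros H [x [y [H1 [H2 H3]]]]. exists x, y. split; auto. eapply rt_trans; eauto. Qed.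
Lemma joinable_rsteps_r a b b' : rsteps R b b' -> joinable a b' -> joinable a b.
Proof. intros H [x [y [H1 [H2 H3]]]]. exists x, y. split; auto. split; auto. eapply rt_trans; eauto. Qed.

Lemma rsteps_simB_path_at_most y a b : rsteps R y a -> simB B a b -> rb_path (at_most y) y b.
Proof.
  intros H1 H2. eapply rb_path_trans.
  - apply rsteps_rb_path with (P := at_most y); eauto.
    + right. apply simB_refl.
    + intros x0 y0 [Hx|Hx] Hs; left; [eapply gt_trans|eapply gt_simB_l]; eauto.
  - apply simB_rb_path; auto. intros x0 Hx0. destruct (rsteps_ge _ _ H1) as [<-|Hg].
    + right; auto.
    + left. eapply gt_simB_r; eauto.
Qed.

Lemma paths_joinable (P : term -> Prop) : (forall v, P v -> paths_joinable_at_most v) -> forall s t, rb_path P s t -> joinable s t.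
Proof.
  intros HM s t H. induction H as [x Hx|x y z Hx Hxy Hyz IH].
  - exists x, x. repeat split; apply rt_refl.
  - destruct IH as [a [b [Hya [Hab Hzb]]]].
    destruct Hxy as [Hxy|[Hyx|Hb]].
    + exists a, b. split; auto. eapply rt_trans; [apply rt_step|]; eauto.
    + assert (HJ : joinable x b).
      { apply (HM y (rb_path_head _ _ _ Hyz)). apply rb_path_step with (y := y).
        * left. apply rstep_R_gt; auto.
        * right; left; auto.
        * eapply rsteps_simB_path_at_most; eauto. }
      eapply joinable_rsteps_r; eauto.
    + assert (HJ : joinable x b).
      { apply (HM y (rb_path_head _ _ _ Hyz)). apply rb_path_step with (y := y).
        * right. apply simB_sym. apply rt_step; auto.
        * right; right; auto.
        * eapply rsteps_simB_path_at_most; eauto. }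
      eapply joinable_rsteps_r; eauto.
Qed.

Lemma simB_cliff a b : simB B a b -> forall c, rstep R a c -> exists d, rstep R b d /\ rb_path (gt a) d c.
Proof.
  intros H. apply clos_rt_rt1n in H. induction H as [a|a a1 b Ha1 Hb IH]; intros c Hc.
  - exists c. split; [auto|]. apply rb_path_refl. apply rstep_R_gt. auto.
  - destruct (local_cliff a c a1 Hc Ha1) as [d1 [Hd1 Hp1]].
    destruct (IH d1 Hd1) as [d [Hd Hp]]. exists d. split; auto.
    eapply rb_path_trans; [|apply Hp1].
    eapply rb_path_weaken; [|apply Hp]. intros x0 Hx0. eapply gt_simB_l; eauto. apply rt_step; auto.
Qed.

(* What a conversion through terms at most [w] reduces to: a ~B-equivalence, or, after one
   R-step from each endpoint not already below [w], a conversion strictly below [w]. *)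
Definition peak_split w s t := simB B s t \/ exists c d,
  (rstep R s c \/ (s = c /\ gt w s)) /\ (rstep R t d \/ (t = d /\ gt w t)) /\ rb_path (gt w) c d.

Lemma at_most_rstep_gt w x y : at_most w x -> rstep R x y -> gt w y.
Proof. intros [H|H] Hs; [eapply gt_trans|eapply gt_simB_l]; eauto. Qed.

Lemma peak_split_cons_simB w v0 v1 vk :
  at_most w v0 -> rb_step v0 v1 -> at_most w v1 -> simB B v1 vk -> peak_split w v0 vk.
Proof.
  intros H0 Hst H1 Hs. destruct Hst as [Hst|[Hst|Hst]].
  - assert (Hv1 : gt w v1) by (apply (at_most_rstep_gt w v0 v1 H0 Hst)).
    right. exists v1, vk. split; [left; auto|]. split.
    + right. split; auto. exact (gt_simB_r _ _ _ Hv1 Hs).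
    + apply simB_rb_path; auto. intros x Hx; exact (gt_simB_r _ _ _ Hv1 Hx).
  - assert (Hv0 : gt w v0) by (apply (at_most_rstep_gt w v1 v0 H1 Hst)).
    destruct H1 as [H1|H1].
    + right. exists v0, vk. split; [right; split; auto|].
      split; [right; split; auto; exact (gt_simB_r _ _ _ H1 Hs)|].
      apply rb_path_step with (y := v1); auto. right; left; auto.
      apply simB_rb_path; auto. intros x Hx; exact (gt_simB_r _ _ _ H1 Hx).
    + destruct (simB_cliff v1 vk Hs v0 Hst) as [d [Hd Hp]].
      right. exists v0, d. split; [right; split; auto|]. split; [left; auto|].
      apply rb_path_sym. eapply rb_path_weaken; [|apply Hp]. intros x Hx; exact (gt_simB_l _ _ _ H1 Hx).
  - left. eapply rt_trans; [apply rt_step|]; eauto.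
Qed.

Lemma peak_split_cons_path w v0 v1 vk c d :
  at_most w v0 -> rb_step v0 v1 -> at_most w v1 ->
  (rstep R v1 c \/ (v1 = c /\ gt w v1)) -> (rstep R vk d \/ (vk = d /\ gt w vk)) ->
  rb_path (gt w) c d -> peak_split w v0 vk.
Proof.
  intros H0 Hst H1 Hc Hd Hp.
  assert (Hcd : gt w v1 -> rb_path (gt w) v1 d).
  { intros Hv1. destruct Hc as [Hc|[<- _]]; auto.
    apply rb_path_step with (y := c); auto. left; auto. }
  destruct Hst as [Hst|[Hst|Hst]].
  - assert (Hv1 : gt w v1) by (apply (at_most_rstep_gt w v0 v1 H0 Hst)).
    right. exists v1, d. split; [left; auto|]. split; auto.
  - assert (Hv0 : gt w v0) by (apply (at_most_rstep_gt w v1 v0 H1 Hst)).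
    destruct H1 as [H1|H1].
    + right. exists v0, d. split; [right; split; auto|]. split; auto.
      apply rb_path_step with (y := v1); auto. right; left; auto.
    + destruct Hc as [Hc|[_ Hc]]; [|exfalso; eapply simB_not_gt; eauto].
      pose proof (local_peak v1 v0 c Hst Hc) as Hpc.
      right. exists v0, d. split; [right; split; auto|]. split; auto.
      eapply rb_path_trans; [|apply Hp]. eapply rb_path_weaken; [|apply Hpc].
      intros x Hx; exact (gt_simB_l _ _ _ H1 Hx).
  - destruct H1 as [H1|H1].
    + assert (Hv0 : gt w v0) by (eapply gt_simB_r; eauto; apply simB_sym, rt_step; auto).
      right. exists v0, d. split; [right; split; auto|]. split; auto.
      apply rb_path_step with (y := v1); auto. right; right; auto.
    + destruct Hc as [Hc|[_ Hc]]; [|exfalso; eapply simB_not_gt; eauto].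
      assert (Hb : conv_step B v1 v0) by (destruct Hst; [right|left]; auto).
      destruct (local_cliff v1 c v0 Hc Hb) as [d0 [Hd0 Hp0]].
      right. exists d0, d. split; [left; auto|]. split; auto.
      eapply rb_path_trans; [|apply Hp]. eapply rb_path_weaken; [|apply Hp0].
      intros x Hx; exact (gt_simB_l _ _ _ H1 Hx).
Qed.

Lemma rb_path_at_most_split w s t : rb_path (at_most w) s t -> peak_split w s t.
Proof.
  intros H. induction H as [x Hx|v0 v1 vk H0 Hst Hrest IH]; [left; apply simB_refl|].
  pose proof (rb_path_head _ _ _ Hrest) as H1.
  destruct IH as [Hs|[c [d [Hc [Hd Hp]]]]].
  - eapply peak_split_cons_simB; eauto.
  - eapply peak_split_cons_path; eauto.
Qed.

Lemma paths_joinable_at_most_all w : paths_joinable_at_most w.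
Proof.
  induction w as [w IH] using (well_founded_induction gt_wf).
  intros s t H. destruct (rb_path_at_most_split w s t H) as [Hs|[c [d [Hc [Hd Hp]]]]].
  - exists s, t. repeat split; auto; apply rt_refl.
  - assert (HJ : joinable c d) by (eapply paths_joinable; eauto).
    apply joinable_rsteps_l with c; [destruct Hc as [Hc|[<- _]]; [apply rt_step; auto|apply rt_refl]|].
    apply joinable_rsteps_r with d; [destruct Hd as [Hd|[<- _]]; [apply rt_step; auto|apply rt_refl]|].
    auto.
Qed.

Theorem church_rosser_of_local_peaks s t : conv (runion R B) s t -> joinable s t.
Proof.
  intros H. apply (paths_joinable (fun _ => True)); [intros; apply paths_joinable_at_most_all|].
  apply clos_rt_rt1n in H. induction H; [constructor; auto|].
  econstructor; eauto. destruct H as [H|H]; apply rstep_union in H; destruct H as [H|H]; unfold rb_step; auto.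
  right; right; left; auto. right; right; right; auto.
Qed.
End CR.

Lemma rsteps_inv a b : rsteps R a b -> a = b \/ exists a1, rstep R a a1 /\ rsteps R a1 b.
Proof.
  intros H. apply clos_rt_rt1n in H. destruct H; auto.
  right. exists y. split; auto. apply clos_rt1n_rt; auto.
Qed.

Lemma conv_below_sym s t : conv_below s t -> conv_below t s.
Proof.
  intros [H|[c [d [Hc [Hd Hp]]]]]; [left; apply simB_sym; auto|].
  right. exists d, c. split; auto. split; auto. apply rb_path_sym.
  eapply rb_path_weaken; [|apply Hp]. intros x [H|H]; auto.
Qed.

Lemma conv_below_simB s t : simB B s t -> conv_below s t.
Proof. left; auto. Qed.

Lemma conv_below_rstep a b : rstep R a b -> conv_below a b.
Proof.
  intros H. right. exists b, b. split; [left; auto|]. split; [right; split; auto|].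
  constructor. left; auto.
Qed.

Lemma rsteps_path (P : term -> Prop) a b : rsteps R a b -> (forall x, a = x \/ gt a x -> P x) -> rb_path P a b.
Proof.
  intros H HP. apply clos_rt_rt1n in H. induction H.
  - constructor. apply HP; auto.
  - apply rb_path_step with (y := y); [apply HP; auto|left; auto|].
    apply IHclos_refl_trans_1n. intros x0 [<-|Hx]; apply HP; right; auto. eapply gt_trans; eauto.
Qed.

Lemma rstep_rsteps_gt a a1 b : rstep R a a1 -> rsteps R a1 b -> gt a b.
Proof. intros H1 H2. destruct (rsteps_ge _ _ H2) as [<-|H]; auto. eapply gt_trans; eauto. Qed.

Lemma rsteps_path_below (P : term -> Prop) a a1 b : rstep R a a1 -> rsteps R a1 b -> (forall z, gt a z -> P z) -> rb_path P a1 b.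
Proof.
  intros H1 H2 HP. apply rsteps_path; auto. intros z [<-|Hz]; apply HP; auto. eapply gt_trans; eauto.
Qed.

Lemma conv_below_half_join s t t1 y : simB B s y -> rstep R t t1 -> rsteps R t1 y -> conv_below s t.
Proof.
  intros Hsy Ht1 Ht1y. pose proof (rstep_rsteps_gt _ _ _ Ht1 Ht1y) as Hty.
  assert (Hts : gt t s) by (eapply gt_simB_r; eauto; apply simB_sym; auto).
  right. exists s, t1. split; [right; split; auto|]. split; [left; auto|].
  eapply rb_path_trans.
  - apply simB_rb_path; eauto. intros z Hz. right. eapply gt_simB_r; [apply Hty|].
    eapply rt_trans; [apply simB_sym|]; eauto.
  - apply rb_path_sym. eapply rsteps_path_below; eauto.
Qed.

Lemma conv_below_of_joinable s t : joinable s t -> conv_below s t.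
Proof.
  intros [x [y [Hsx [Hxy Hty]]]].
  destruct (rsteps_inv _ _ Hsx) as [<-|[s1 [Hs1 Hs1x]]]; destruct (rsteps_inv _ _ Hty) as [<-|[t1 [Ht1 Ht1y]]].
  - left; auto.
  - eapply conv_below_half_join; eauto.
  - apply conv_below_sym. eapply conv_below_half_join; eauto. apply simB_sym; auto.
  - pose proof (rstep_rsteps_gt _ _ _ Hs1 Hs1x) as Hsx'.
    right. exists s1, t1. split; [left; auto|]. split; [left; auto|].
    eapply rb_path_trans; [eapply rsteps_path_below; eauto|].
    eapply rb_path_trans.
    + apply simB_rb_path; eauto. intros z Hz. left. eapply gt_simB_r; eauto.
    + apply rb_path_sym. eapply rsteps_path_below; eauto.
Qed.

Lemma conv_below_trans s u t : conv_below s u -> gt s u -> conv_below u t -> conv_below s t.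
Proof.
  intros Hsu Hgt Hut.
  destruct Hsu as [Hsu|[c [d [Hc [Hd Hp]]]]]; [exfalso; eapply simB_not_gt; eauto|].
  destruct Hc as [Hc|[_ Hc]]; [|exfalso; apply (gt_irr s); eauto].
  assert (Hpu : rb_path (gt s) c u).
  { eapply rb_path_trans; [eapply rb_path_weaken; [|apply Hp]; intros z [Hz|Hz]; eauto|].
    destruct Hd as [Hd|[<- _]]; [|constructor; auto].
    apply rb_path_one; [eapply gt_trans; eauto|right; left; auto|auto]. }
  destruct Hut as [Hut|[c' [d' [Hc' [Hd' Hp']]]]].
  - right. exists c, t. split; [left; auto|]. split; [right; split; auto; eapply gt_simB_r; eauto|].
    eapply rb_path_trans; [eapply rb_path_weaken; [|apply Hpu]; auto|].
    apply simB_rb_path; auto. intros z Hz. left. eapply gt_simB_r; eauto.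
  - right. exists c, d'. split; [left; auto|].
    split; [destruct Hd' as [Hd'|[<- Hd']]; [left; auto|right; split; eauto]|].
    eapply rb_path_trans; [eapply rb_path_weaken; [|apply Hpu]; auto|].
    destruct Hc' as [Hc'|[<- _]].
    + apply rb_path_step with (y := c'); [left; auto|left; auto|].
      eapply rb_path_weaken; [|apply Hp']. intros z [Hz|Hz]; eauto.
    + eapply rb_path_weaken; [|apply Hp']. intros z [Hz|Hz]; eauto.
Qed.

Lemma rb_path_of_conv_below_peak w s t : conv_below s t -> gt w s -> gt w t -> rb_path (gt w) s t.
Proof.
  intros [H|[c [d [Hc [Hd Hp]]]]] Hs Ht.
  - apply simB_rb_path; auto. intros x Hx; exact (gt_simB_r _ _ _ Hs Hx).
  - assert (H1 : rb_path (gt w) s c).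
    { destruct Hc as [Hc|[<- _]]; [|constructor; auto].
      apply rb_path_one; [exact Hs|left; exact Hc|eapply gt_trans; [exact Hs|apply rstep_R_gt; exact Hc]]. }
    assert (H2 : rb_path (gt w) c d).
    { eapply rb_path_weaken; [|apply Hp]. intros z [Hz|Hz]; eauto. }
    assert (H3 : rb_path (gt w) d t).
    { destruct Hd as [Hd|[<- _]]; [|constructor; auto].
      apply rb_path_one; [eapply gt_trans; [exact Ht|apply rstep_R_gt; exact Hd]|right; left; exact Hd|exact Ht]. }
    eapply rb_path_trans; eauto. eapply rb_path_trans; eauto.
Qed.

Lemma rb_path_of_conv_below_cliff w s t : conv_below s t -> gt w s -> simB B w t -> exists d, rstep R t d /\ rb_path (gt w) d s.
Proof.
  intros [H|[c [d [Hc [Hd Hp]]]]] Hs Ht.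
  - exfalso. apply (simB_not_gt w s); auto. eapply rt_trans; eauto. apply simB_sym; auto.
  - assert (Hwt : forall z, gt t z -> gt w z) by (intros; eapply gt_simB_l; eauto).
    destruct Hd as [Hd|[<- Hd]]; [|exfalso; apply (simB_not_gt w t Ht); eapply gt_trans; eauto].
    exists d. split; auto. apply rb_path_sym.
    eapply rb_path_trans; [|eapply rb_path_weaken; [|apply Hp]; intros z [Hz|Hz]; eauto].
    destruct Hc as [Hc|[<- _]]; [|constructor; auto].
    apply rb_path_one; auto; [left; auto|]. eapply gt_trans; eauto.
Qed.

Lemma rb_path_conv (P : term -> Prop) a b : rb_path P a b -> conv (runion R B) a b.
Proof.
  intros H; induction H; [apply rt_refl|]. eapply rt_trans; eauto. apply rt_step.
  destruct H0 as [H0|[H0|[H0|H0]]].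
  - left. apply rstep_union; auto.
  - right. apply rstep_union; auto.
  - left. apply rstep_union; auto.
  - right. apply rstep_union; auto.
Qed.

Lemma simB_conv a b : simB B a b -> conv (runion R B) a b.
Proof.
  intros H. apply (rb_path_conv (fun _ => True)). apply simB_rb_path; auto.
Qed.

Lemma conv_below_conv s t : conv_below s t -> conv (runion R B) s t.
Proof.
  intros [H|[c [d [Hc [Hd Hp]]]]]; [apply simB_conv; auto|].
  eapply rt_trans; [|eapply rt_trans; [eapply rb_path_conv; eauto|]].
  - destruct Hc as [Hc|[<- _]]; [apply rt_step; left; apply rstep_union; auto|apply rt_refl].
  - destruct Hd as [Hd|[<- _]]; [apply rt_step; right; apply rstep_union; auto|apply rt_refl].
Qed.

Lemma rb_path_map (P Q : term -> Prop) (phi : term -> term) a b :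
  (forall x, P x -> Q (phi x)) -> (forall x y, rb_step x y -> rb_step (phi x) (phi y)) ->
  rb_path P a b -> rb_path Q (phi a) (phi b).
Proof. intros H1 H2 H; induction H; econstructor; eauto. Qed.

Lemma conv_below_ctx_subst a b th u p v : conv_below a b -> subterm_at u p = Some v ->
  conv_below (replace_at u p (subst th a)) (replace_at u p (subst th b)).
Proof.
  intros HG Hp. set (phi := fun x => replace_at u p (subst th x)).
  assert (HR : forall x y, rstep R x y -> rstep R (phi x) (phi y)).
  { intros; apply rstep_ctx with (v := v); auto. apply rstep_subst; auto. }
  assert (HB : forall x y, simB B x y -> simB B (phi x) (phi y)).
  { intros; apply conv_ctx with (v := v); auto. apply conv_subst; auto. }
  assert (HBs : forall x y, conv_step B x y -> conv_step B (phi x) (phi y)).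
  { intros; apply conv_step_ctx with (v := v); auto. apply conv_step_subst; auto. }
  assert (Hg : forall x y, gt x y -> gt (phi x) (phi y)).
  { intros; apply gt_ctx with (v := v); auto. }
  change (conv_below (phi a) (phi b)).
  destruct HG as [H|[c [d [Hc [Hd Hpath]]]]]; [left; auto|].
  right. exists (phi c), (phi d). split; [destruct Hc as [Hc|[<- Hc]]; auto|].
  split; [destruct Hd as [Hd|[<- Hd]]; auto|].
  eapply rb_path_map; [| |apply Hpath].
  - intros x [Hx|Hx]; auto.
  - intros x y [H|[H|H]]; unfold rb_step; auto.
Qed.
Definition inner_prime u := forall q v, q <> [] -> subterm_at u q = Some v -> normal_form R v.

Section Crit.
Variables (Si So : rules F).
Hypothesis cp_conv_below : forall s t, pcp R Si So s t -> conv_below s t.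
Hypothesis So_vars : forall l r, So l r -> forall x, In x (vars r) -> In x (vars l).

Lemma critical_overlap_conv_below w p q lo ro so li ri si f ts :
  So lo ro -> subterm_at w p = Some (subst so lo) ->
  Si li ri -> subterm_at lo q = Some (Fun f ts) -> subst so (Fun f ts) = subst si li ->
  inner_prime (subst si li) ->
  conv_below (replace_at w (p ++ q) (subst si ri)) (replace_at w p (subst so ro)).
Proof.
  intros Ho Hwp Hi Hf Hfs Hpr.
  destruct (rename_apart li ri (vars lo ++ vars ro) so si) as (rho & tau & Hrho & Hdisj & Hli & Hri & Hso).
  set (li' := subst (fun x => Var (rho x)) li) in *.
  set (ri' := subst (fun x => Var (rho x)) ri) in *.
  assert (Hlow : forall t0, incl (vars t0) (vars lo ++ vars ro) -> subst tau t0 = subst so t0).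
  { intros t0 Ht0. apply subst_ext. auto. }
  assert (Hlo : subst tau lo = subst so lo) by (apply Hlow; intros x Hx; apply in_or_app; auto).
  assert (Hro : subst tau ro = subst so ro) by (apply Hlow; intros x Hx; apply in_or_app; auto).
  assert (Hft : subst tau (Fun f ts) = subst si li).
  { rewrite Hlow; [exact Hfs|]. intros x Hx. apply in_or_app. left. eapply vars_subterm_at; eauto. }
  assert (Hun : subst tau li' = subst tau (Fun f ts)) by congruence.
  destruct (mgu_exists _ _ _ Hun) as [sg [Hsg Hmg]]. destruct (Hmg tau Hun) as [th Hth].
  assert (Hc : forall t0, subst tau t0 = subst th (subst sg t0)).
  { intros t0. rewrite subst_subst. apply subst_ext. auto. }
  destruct (classic (q = [] /\ is_variant li' ri' lo ro)) as [[-> Hvar]|Hnv].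
  - (* the overlap of a rule with a variant of itself at the root is not a critical pair *)
    injection Hf as Hf. subst lo. rewrite app_nil_r, <- Hri, <- Hro.
    erewrite is_variant_subst_eq; eauto. apply conv_below_simB, simB_refl.
  - assert (Hpcp : pcp R Si So (replace_at (subst sg lo) q (subst sg ri')) (subst sg ro)).
    { exists li', ri', lo, ro, q, sg, f, ts.
      split; [exists li, ri; split; [exact Hi|exists rho; auto]|].
      split; [exists lo, ro; split; [exact Ho|exists (fun x => x)]|].
      { split; [exists (fun x => x); auto|]. change (fun x => Var x) with (@Var F). rewrite !subst_id. auto. }
      split; [intros x Hx Hx'; exact (Hdisj x Hx Hx')|].
      split; [exact Hf|]. split; [intros Hq0 Hiv; apply Hnv; auto|].
      split; [split; auto|]. split; [reflexivity|]. split; [reflexivity|].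
      intros q' u Hq' Hu [u' Hu']. apply (Hpr q' (subst th u)); auto.
      + rewrite <- (subterm_at_subst th _ _ _ Hu), <- Hc, Hft. reflexivity.
      + exists (subst th u'). apply rstep_subst; auto. }
    pose proof (conv_below_ctx_subst _ _ th w p _ (cp_conv_below _ _ Hpcp) Hwp) as HG.
    rewrite <- Hc, Hro in HG.
    rewrite (subst_replace_at th _ _ (subst sg (Fun f ts))) in HG by (apply subterm_at_subst; auto).
    rewrite <- !Hc, Hlo, Hri in HG.
    rewrite (replace_at_app _ _ _ _ _ Hwp). exact HG.
Qed.

Lemma overlap_critical_or_variable w p q lo ro so li ri si s t :
  So lo ro -> subterm_at w p = Some (subst so lo) -> t = replace_at w p (subst so ro) ->
  Si li ri -> subterm_at w (p ++ q) = Some (subst si li) -> s = replace_at w (p ++ q) (subst si ri) ->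
  inner_prime (subst si li) ->
  conv_below s t \/
  (exists q1 q2 x, q = q1 ++ q2 /\ subterm_at lo q1 = Some (Var x) /\ subterm_at (so x) q2 = Some (subst si li)).
Proof.
  intros Ho Hwp -> Hi Hwq -> Hpr.
  rewrite (subterm_at_app_Some _ _ _ _ Hwp) in Hwq.
  destruct (subterm_at_subst_inv _ _ _ _ Hwq) as [[f [ts Hf]]|Hv]; [left|right; exact Hv].
  rewrite (subterm_at_subst so _ _ _ Hf) in Hwq. injection Hwq as Hfs.
  eapply critical_overlap_conv_below; eauto.
Qed.
End Crit.

Section CriticalPairs.
Hypothesis R_left_linear : left_linear R.
Hypothesis B_vars : vars_preserving B.
Hypothesis cp_RR : forall s t, pcp R R R s t -> conv_below s t.
Hypothesis cp_RB : forall s t, pcp R R (sym_rules B) s t -> conv_below s t.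
Hypothesis cp_BR : forall s t, pcp R (sym_rules B) R s t -> conv_below s t.

Lemma sym_rules_vars : forall l r, sym_rules B l r -> forall x, In x (vars r) -> In x (vars l).
Proof. intros l r [H|H] x Hx; apply (B_vars _ _ H); auto. Qed.

Lemma variable_overlap_split w p q1 q2 x lo so (Si : rules F) li ri si s :
  subterm_at w p = Some (subst so lo) -> Si li ri ->
  subterm_at lo q1 = Some (Var x) -> subterm_at (so x) q2 = Some (subst si li) ->
  s = replace_at w (p ++ q1 ++ q2) (subst si ri) ->
  exists u', rstep Si (so x) u' /\ s = replace_at w p (replace_at (subst so lo) q1 u').
Proof.
  intros Hwp Hi Hq1 Hq2 Hs. exists (replace_at (so x) q2 (subst si ri)). split.
  - exists q2, li, ri, si. auto.
  - rewrite Hs, (replace_at_app _ _ _ _ _ Hwp). f_equal.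
    apply replace_at_app. apply (subterm_at_subst so _ _ _ Hq1).
Qed.

(* Left-linearity: [x] occurs only once in [lo], so rewriting that one copy of [so x] still
   leaves an instance of [lo]. *)
Lemma variable_overlap_rstep w p q1 q2 x lo ro so (Si : rules F) li ri si s t :
  R lo ro -> subterm_at w p = Some (subst so lo) -> t = replace_at w p (subst so ro) ->
  Si li ri -> subterm_at lo q1 = Some (Var x) -> subterm_at (so x) q2 = Some (subst si li) ->
  s = replace_at w (p ++ q1 ++ q2) (subst si ri) ->
  exists u', rstep Si (so x) u' /\ rstep R s (replace_at w p (subst (upd so x u') ro)).
Proof.
  intros Ho Hwp Ht Hi Hq1 Hq2 Hs.
  destruct (variable_overlap_split w p q1 q2 x lo so Si li ri si s Hwp Hi Hq1 Hq2 Hs) as [u' [Hu' Hs']].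
  exists u'. split; auto. rewrite (replace_at_subst_linear lo q1 x so u' (R_left_linear _ _ Ho) Hq1) in Hs'.
  exists p, lo, ro, (upd so x u'). split; auto. split.
  - rewrite Hs'. eapply subterm_at_replace_at; eauto.
  - rewrite Hs'. rewrite (replace_at_twice _ _ _ _ _ Hwp). auto.
Qed.

Lemma rt_upd (T : relation term) so x u' : clos_refl_trans _ T (so x) u' ->
  forall y, clos_refl_trans _ T (so y) (upd so x u' y).
Proof. intros H y. unfold upd. destruct (Nat.eq_dec y x) as [->|]; auto. apply rt_refl. Qed.

Lemma nested_RR_conv_below w p q lo ro so li ri si s t :
  R lo ro -> subterm_at w p = Some (subst so lo) -> t = replace_at w p (subst so ro) ->
  R li ri -> subterm_at w (p ++ q) = Some (subst si li) -> s = replace_at w (p ++ q) (subst si ri) ->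
  inner_prime (subst si li) -> conv_below s t.
Proof.
  intros Ho Hwp Ht Hi Hwq Hs Hpr.
  destruct (overlap_critical_or_variable R R cp_RR (oriented_vars R R_oriented) w p q lo ro so li ri si s t Ho Hwp Ht Hi Hwq Hs Hpr)
    as [HG|[q1 [q2 [x [-> [Hq1 Hq2]]]]]]; auto.
  destruct (variable_overlap_rstep w p q1 q2 x lo ro so R li ri si s t Ho Hwp Ht Hi Hq1 Hq2 Hs) as [u' [Hu' Hsv]].
  apply conv_below_of_joinable. exists (replace_at w p (subst (upd so x u') ro)), (replace_at w p (subst (upd so x u') ro)).
  split; [apply rt_step; auto|]. split; [apply simB_refl|].
  rewrite Ht. apply (rsteps_ctx R) with (v := subst so lo); auto.
  apply rt_subst_pointwise. apply ctx_closed_child_closed, rstep_ctx. apply rt_upd. apply rt_step; auto.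
Qed.

Lemma nested_RB_conv_below w p q lo ro so li ri si s t :
  R lo ro -> subterm_at w p = Some (subst so lo) -> t = replace_at w p (subst so ro) ->
  sym_rules B li ri -> subterm_at w (p ++ q) = Some (subst si li) -> s = replace_at w (p ++ q) (subst si ri) ->
  inner_prime (subst si li) -> conv_below s t.
Proof.
  intros Ho Hwp Ht Hi Hwq Hs Hpr.
  destruct (overlap_critical_or_variable (sym_rules B) R cp_BR (oriented_vars R R_oriented) w p q lo ro so li ri si s t Ho Hwp Ht Hi Hwq Hs Hpr)
    as [HG|[q1 [q2 [x [-> [Hq1 Hq2]]]]]]; auto.
  destruct (variable_overlap_rstep w p q1 q2 x lo ro so (sym_rules B) li ri si s t Ho Hwp Ht Hi Hq1 Hq2 Hs) as [u' [Hu' Hsv]].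
  apply conv_below_of_joinable. exists (replace_at w p (subst (upd so x u') ro)), t.
  split; [apply rt_step; auto|]. split; [|apply rt_refl].
  apply simB_sym. rewrite Ht. apply (conv_ctx B) with (v := subst so lo); auto.
  apply rt_subst_pointwise. apply ctx_closed_child_closed, conv_step_ctx. apply rt_upd. apply rt_step.
  apply rstep_sym_rules; auto.
Qed.

Lemma nested_BR_conv_below w p q lo ro so li ri si s t :
  sym_rules B lo ro -> subterm_at w p = Some (subst so lo) -> t = replace_at w p (subst so ro) ->
  R li ri -> subterm_at w (p ++ q) = Some (subst si li) -> s = replace_at w (p ++ q) (subst si ri) ->
  inner_prime (subst si li) -> conv_below s t.
Proof.
  intros Ho Hwp Ht Hi Hwq Hs Hpr.
  destruct (overlap_critical_or_variable R (sym_rules B) cp_RB sym_rules_vars w p q lo ro so li ri si s t Ho Hwp Ht Hi Hwq Hs Hpr)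
    as [HG|[q1 [q2 [x [-> [Hq1 Hq2]]]]]]; auto.
  destruct (variable_overlap_split w p q1 q2 x lo so R li ri si s Hwp Hi Hq1 Hq2 Hs) as [u' [Hu' Hs']].
  apply conv_below_of_joinable. exists (replace_at w p (subst (upd so x u') lo)), (replace_at w p (subst (upd so x u') ro)).
  split; [|split].
  - rewrite Hs'. apply (rsteps_ctx R) with (v := subst so lo); auto.
    apply rt_replace_at_var_upd; auto. apply ctx_closed_child_closed, rstep_ctx. apply rt_step; auto.
  - apply rt_step. apply rstep_sym_rules.
    exists p, lo, ro, (upd so x u'). split; auto. split.
    + eapply subterm_at_replace_at; eauto.
    + rewrite (replace_at_twice _ _ _ _ _ Hwp). auto.
  - rewrite Ht. apply (rsteps_ctx R) with (v := subst so lo); auto.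
    apply rt_subst_pointwise. apply ctx_closed_child_closed, rstep_ctx. apply rt_upd. apply rt_step; auto.
Qed.

Definition has_redex u := exists q l r sg, R l r /\ subterm_at u q = Some (subst sg l).

Lemma not_normal_has_redex v : ~ normal_form R v -> has_redex v.
Proof.
  intros H. apply NNPP. intros Hn. apply H. intros [v' [q [l [r [sg [Hlr [Hq _]]]]]]].
  apply Hn. exists q, l, r, sg. auto.
Qed.

Lemma not_inner_prime_redex u : ~ inner_prime u ->
  exists q v, q <> [] /\ subterm_at u q = Some v /\ has_redex v.
Proof.
  intros Hnp. apply NNPP. intros Hno. apply Hnp. intros q v Hq Hv.
  apply NNPP. intros Hnf. apply Hno. exists q, v. auto using not_normal_has_redex.
Qed.

Lemma innermost_redex u : has_redex u ->
  exists q l r sg, R l r /\ subterm_at u q = Some (subst sg l) /\ inner_prime (subst sg l).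
Proof.
  induction u as [x|f ts IH] using term_nested_ind; intros [q [l [r [sg [Hlr Hq]]]]].
  - destruct q as [|i q]; [|discriminate]. exists [], l, r, sg. repeat split; auto.
    simpl in Hq. injection Hq; intros Hq'. rewrite <- Hq'. intros [|i q'] v Hne Hv; [congruence|discriminate].
  - assert (Hc : forall i q0 l0 r0 sg0, R l0 r0 -> subterm_at (Fun f ts) (i :: q0) = Some (subst sg0 l0) ->
              exists q l r sg, R l r /\ subterm_at (Fun f ts) q = Some (subst sg l) /\ inner_prime (subst sg l)).
    { intros i q0 l0 r0 sg0 H0 Hq0. simpl in Hq0.
      destruct (nth_error ts i) as [ti|] eqn:E; [|discriminate].
      rewrite Forall_forall in IH. destruct (IH ti (nth_error_In _ _ E)) as [q1 [l1 [r1 [sg1 [H1 [H2 H3]]]]]].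
      - exists q0, l0, r0, sg0. auto.
      - exists (i :: q1), l1, r1, sg1. simpl. rewrite E. auto. }
    destruct q as [|i q0]; [|eapply Hc; eauto].
    simpl in Hq. injection Hq as Hq.
    destruct (classic (inner_prime (subst sg l))) as [Hp|Hp].
    + exists [], l, r, sg. simpl. rewrite Hq. auto.
    + destruct (not_inner_prime_redex _ Hp) as [[|i q'] [v [Hne [Hv [q1 [l1 [r1 [sg1 [H1 H2]]]]]]]]];
        [congruence|].
      apply (Hc i (q' ++ q1) l1 r1 sg1 H1). rewrite <- Hq in Hv.
      change (i :: q' ++ q1) with ((i :: q') ++ q1). rewrite (subterm_at_app_Some _ _ _ _ Hv). auto.
Qed.

Lemma inner_prime_redex_below w P r0 : subterm_at w P = Some r0 -> ~ inner_prime r0 ->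
  exists q l r sg, q <> [] /\ R l r /\ subterm_at w (P ++ q) = Some (subst sg l) /\ inner_prime (subst sg l).
Proof.
  intros HP Hnp. destruct (not_inner_prime_redex _ Hnp) as [q' [v [Hne [Hv Hred]]]].
  destruct (innermost_redex v Hred) as [q0 [l [r [sg [H1 [H2 H3]]]]]].
  exists (q' ++ q0), l, r, sg. split; [destruct q'; simpl; congruence|]. split; auto. split; auto.
  rewrite (subterm_at_app_Some _ _ _ _ HP), (subterm_at_app_Some _ _ _ _ Hv). auto.
Qed.
(* If the inner redex is not prime, go through an innermost redex [w'] inside it: both
   overlaps with [w'] are prime and [w'] is below [w]. *)
Lemma local_peak_nested w p q lo ro so li ri si s t :
  R lo ro -> subterm_at w p = Some (subst so lo) -> t = replace_at w p (subst so ro) ->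
  R li ri -> subterm_at w (p ++ q) = Some (subst si li) -> s = replace_at w (p ++ q) (subst si ri) ->
  rb_path (gt w) s t.
Proof.
  intros Ho Hwp Ht Hi Hwq Hs.
  assert (Hws : gt w s) by (apply rstep_R_gt; rewrite Hs; apply rstep_at with (l := li); auto).
  assert (Hwt : gt w t) by (apply rstep_R_gt; rewrite Ht; apply rstep_at with (l := lo); auto).
  destruct (classic (inner_prime (subst si li))) as [Hpr|Hnp].
  - apply rb_path_of_conv_below_peak; auto. apply (nested_RR_conv_below w p q lo ro so li ri si s t); auto.
  - destruct (inner_prime_redex_below _ _ _ Hwq Hnp) as [q'' [l [r [sg [Hne [Hlr [Hw' Hpr']]]]]]].
    set (w' := replace_at w ((p ++ q) ++ q'') (subst sg r)).
    assert (Hww' : gt w w') by (apply rstep_R_gt; apply rstep_at with (l := l); auto).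
    assert (G1 : conv_below w' t).
    { apply (nested_RR_conv_below w p (q ++ q'') lo ro so l r sg w' t); auto; rewrite app_assoc; auto. }
    assert (G2 : conv_below w' s).
    { apply (nested_RR_conv_below w (p ++ q) q'' li ri si l r sg w' s); auto. }
    eapply rb_path_trans; [apply rb_path_sym; apply rb_path_of_conv_below_peak; eauto|].
    apply rb_path_of_conv_below_peak; auto.
Qed.

Lemma local_cliff_nested_R w p q lo ro so li ri si s t :
  R lo ro -> subterm_at w p = Some (subst so lo) -> s = replace_at w p (subst so ro) ->
  sym_rules B li ri -> subterm_at w (p ++ q) = Some (subst si li) -> t = replace_at w (p ++ q) (subst si ri) ->
  exists d, rstep R t d /\ rb_path (gt w) d s.
Proof.
  intros Ho Hwp Hs Hi Hwq Ht.
  assert (Hws : gt w s) by (apply rstep_R_gt; rewrite Hs; apply rstep_at with (l := lo); auto).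
  assert (Hwt : simB B w t).
  { apply rt_step. apply rstep_sym_rules. rewrite Ht. apply rstep_at with (l := li); auto. }
  destruct (classic (inner_prime (subst si li))) as [Hpr|Hnp].
  - apply rb_path_of_conv_below_cliff; auto. apply conv_below_sym. apply (nested_RB_conv_below w p q lo ro so li ri si t s); auto.
  - destruct (inner_prime_redex_below _ _ _ Hwq Hnp) as [q'' [l [r [sg [Hne [Hlr [Hw' Hpr']]]]]]].
    set (w' := replace_at w ((p ++ q) ++ q'') (subst sg r)).
    assert (Hww' : gt w w') by (apply rstep_R_gt; apply rstep_at with (l := l); auto).
    assert (G1 : conv_below w' s).
    { apply (nested_RR_conv_below w p (q ++ q'') lo ro so l r sg w' s); auto; rewrite app_assoc; auto. }
    assert (G2 : conv_below w' t).
    { apply (nested_BR_conv_below w (p ++ q) q'' li ri si l r sg w' t); auto. }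
    destruct (rb_path_of_conv_below_cliff w w' t G2 Hww' Hwt) as [d [Hd Hp]].
    exists d. split; auto. eapply rb_path_trans; [apply Hp|]. apply rb_path_of_conv_below_peak; auto.
Qed.

Lemma local_cliff_nested_B w p q lo ro so li ri si s t :
  sym_rules B lo ro -> subterm_at w p = Some (subst so lo) -> t = replace_at w p (subst so ro) ->
  R li ri -> subterm_at w (p ++ q) = Some (subst si li) -> s = replace_at w (p ++ q) (subst si ri) ->
  exists d, rstep R t d /\ rb_path (gt w) d s.
Proof.
  intros Ho Hwp Ht Hi Hwq Hs.
  assert (Hws : gt w s) by (apply rstep_R_gt; rewrite Hs; apply rstep_at with (l := li); auto).
  assert (Hwt : simB B w t).
  { apply rt_step. apply rstep_sym_rules. rewrite Ht. apply rstep_at with (l := lo); auto. }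
  destruct (classic (inner_prime (subst si li))) as [Hpr|Hnp].
  - apply rb_path_of_conv_below_cliff; auto. apply (nested_BR_conv_below w p q lo ro so li ri si s t); auto.
  - destruct (inner_prime_redex_below _ _ _ Hwq Hnp) as [q'' [l [r [sg [Hne [Hlr [Hw' Hpr']]]]]]].
    set (w' := replace_at w ((p ++ q) ++ q'') (subst sg r)).
    assert (Hww' : gt w w') by (apply rstep_R_gt; apply rstep_at with (l := l); auto).
    assert (G1 : conv_below w' t).
    { apply (nested_BR_conv_below w p (q ++ q'') lo ro so l r sg w' t); auto; rewrite app_assoc; auto. }
    assert (G2 : conv_below w' s).
    { apply (nested_RR_conv_below w (p ++ q) q'' li ri si l r sg w' s); auto. }
    destruct (rb_path_of_conv_below_cliff w w' t G1 Hww' Hwt) as [d [Hd Hp]].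
    exists d. split; auto. eapply rb_path_trans; [apply Hp|]. apply rb_path_of_conv_below_peak; auto.
Qed.

Theorem local_peak_below : forall w s t, rstep R w s -> rstep R w t -> rb_path (gt w) s t.
Proof.
  intros w s t [p1 [l1 [r1 [s1 [H1 [Hp1 ->]]]]]] [p2 [l2 [r2 [s2 [H2 [Hp2 ->]]]]]].
  destruct (pos_prefix_or_parallel p1 p2) as [[q ->]|[[q ->]|Hpar]].
  - apply rb_path_sym. apply (local_peak_nested w p1 q l1 r1 s1 l2 r2 s2); auto.
  - apply (local_peak_nested w p2 q l2 r2 s2 l1 r1 s1); auto.
  - destruct (parallel_steps_commute R R w p1 p2 l1 r1 s1 l2 r2 s2 Hpar H1 Hp1 H2 Hp2) as [v [Hv1 Hv2]].
    apply rb_path_of_conv_below_peak; auto.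
    + apply conv_below_of_joinable. exists v, v. split; [apply rt_step; auto|]. split; [apply simB_refl|apply rt_step; auto].
    + apply rstep_R_gt. apply rstep_at with (l := l1); auto.
    + apply rstep_R_gt. apply rstep_at with (l := l2); auto.
Qed.

Theorem local_cliff_below : forall w s t, rstep R w s -> conv_step B w t -> exists d, rstep R t d /\ rb_path (gt w) d s.
Proof.
  intros w s t [p1 [l1 [r1 [s1 [H1 [Hp1 ->]]]]]] Hb.
  apply rstep_sym_rules in Hb. destruct Hb as [p2 [l2 [r2 [s2 [H2 [Hp2 ->]]]]]].
  destruct (pos_prefix_or_parallel p1 p2) as [[q ->]|[[q ->]|Hpar]].
  - apply (local_cliff_nested_R w p1 q l1 r1 s1 l2 r2 s2); auto.
  - apply (local_cliff_nested_B w p2 q l2 r2 s2 l1 r1 s1); auto.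
  - destruct (parallel_steps_commute R (sym_rules B) w p1 p2 l1 r1 s1 l2 r2 s2 Hpar H1 Hp1 H2 Hp2) as [v [Hv1 Hv2]].
    apply rb_path_of_conv_below_cliff; auto.
    + apply conv_below_sym. apply conv_below_of_joinable. exists v, (replace_at w p1 (subst s1 r1)).
      split; [apply rt_step; auto|]. split; [|apply rt_refl].
      apply simB_sym. apply rt_step. apply rstep_sym_rules; auto.
    + apply rstep_R_gt. apply rstep_at with (l := l1); auto.
    + apply rt_step. apply rstep_sym_rules. apply rstep_at with (l := l2); auto.
Qed.
End CriticalPairs.

Theorem church_rosser_mod_of_critical_pairs :
  vars_preserving B -> left_linear R ->
  (forall s t, pcp R R R s t \/ pcp R R (sym_rules B) s t \/ pcp R (sym_rules B) R s t ->
     conv_below s t) ->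
  church_rosser_mod B R.
Proof.
  intros B_vars R_left_linear cp s t Hst.
  apply church_rosser_of_local_peaks; [| |exact Hst].
  - apply local_peak_below; auto.
  - apply local_cliff_below; auto.
Qed.

Lemma conv_below_ctx_closed : ctx_closed conv_below.
Proof.
  intros a b u p v H Hp. pose proof (conv_below_ctx_subst a b Var u p v H Hp) as H'.
  rewrite !subst_id in H'. exact H'.
Qed.

Lemma conv_below_subst_closed : subst_closed conv_below.
Proof. intros a b th H. exact (conv_below_ctx_subst a b th (subst th a) [] (subst th a) H eq_refl). Qed.

Lemma rstep_conv_below (X : rules F) : (forall l r, X l r -> conv_below l r) ->
  forall a b, rstep X a b -> conv_below a b.
Proof. apply rstep_incl_closed; [apply conv_below_ctx_closed|apply conv_below_subst_closed]. Qed.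

Lemma inf_step_conv_below (s1 s2 : state F) : inf_step B gt s1 s2 ->
  (forall l r, snd s2 l r -> gt l r) ->
  (forall a b, fst s2 a b \/ snd s2 a b -> conv_below a b) ->
  forall a b, fst s1 a b \/ snd s1 a b -> conv_below a b.
Proof.
  destruct s1 as [E1 R1], s2 as [E2 R2]. simpl. intros HS Hgt2 H.
  assert (HR2 : forall a b, rstep R2 a b -> conv_below a b).
  { apply rstep_conv_below. intros; apply H; auto. }
  destruct HS as [[s [t [u [Hus [Hut [HE HR]]]]]]|[[s [t [Hd [Hgt HR]]]]|[[s [t [Hd [Hst HR]]]]|
    [[E0 [s [t [u [Hd [Hsu [HE HR]]]]]]]|[[s [t [u [Hd [Hsu HE]]]]]|[R0 [s [t [u [Hd [Htu [HR' HE]]]]]]]]]]]];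
    intros a b [Hab|Hab].
  - apply H. left. apply HE. left; auto.
  - apply H. right. apply HR; auto.
  - destruct Hd as [[_ Hd]|[_ Hd]]; apply Hd in Hab; destruct Hab as [Hab|[-> ->]];
      try (solve [apply H; left; auto]).
    + apply H. right. apply HR. right; split; auto.
    + apply conv_below_sym. apply H. right. apply HR. right; split; auto.
  - apply H. right. apply HR. left; auto.
  - destruct Hd as [_ Hd]. apply Hd in Hab. destruct Hab as [Hab|[-> ->]]; [apply H; left; auto|].
    apply conv_below_simB; auto.
  - apply H. right. apply HR; auto.
  - assert (Hsu' : rstep R2 s u) by (revert Hsu; apply rstep_mono; intros; apply HR; auto).
    assert (Hut : conv_below u t) by (apply H; left; apply HE; right; split; auto).
    destruct Hd as [[_ Hd]|[_ Hd]]; apply Hd in Hab; destruct Hab as [Hab|[-> ->]];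
      try (solve [apply H; left; apply HE; left; auto]).
    + eapply conv_below_trans; [apply HR2, Hsu'|eapply rstep_gt; eauto|exact Hut].
    + apply conv_below_sym. eapply conv_below_trans; [apply HR2, Hsu'|eapply rstep_gt; eauto|exact Hut].
  - apply H. right. apply HR; auto.
  - apply H. left. apply HE. left; auto.
  - destruct Hd as [_ Hd]. apply Hd in Hab. destruct Hab as [Hab|[-> ->]]; [apply H; right; auto|].
    eapply conv_below_trans; [apply HR2; eauto|eapply rstep_gt; eauto|].
    apply H. left. apply HE. right; split; auto.
  - apply H. left. apply HE. auto.
  - destruct Hd as [_ Hd]. apply Hd in Hab. destruct Hab as [Hab|[-> ->]]; [apply H; right; apply HR'; left; auto|].
    assert (Htu' : rstep R2 t u) by (revert Htu; apply rstep_mono; intros; apply HR'; left; auto).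
    assert (Hsu : R2 s u) by (apply HR'; right; split; auto).
    eapply conv_below_trans; [apply H; right; eauto|apply Hgt2; auto|].
    apply conv_below_sym. apply HR2; auto.
Qed.
End Oriented.

Lemma terminating_mod_of_oriented (R : rules F) :
  (forall l r, R l r -> gt l r) -> terminating_mod B R.
Proof.
  intros HR [f Hf]. apply no_infinite_gt_chain. exists f. intros k.
  destruct (Hf k) as [s' [t' [H1 [H2 H3]]]]. eapply gt_compat; eauto. eapply rstep_gt; eauto.
Qed.

Section Run.
Variables (E : rules F) (n : nat) (st : nat -> state F).
Hypothesis run : is_run B gt E n st.

Lemma run_oriented i : i <= n -> forall l r, snd (st i) l r -> gt l r.
Proof.
  destruct run as [_ [R0 steps]].
  induction i as [|i IH]; intros Hi l r Hlr.
  - apply R0 in Hlr. destruct Hlr.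
  - apply (inf_step_oriented (st i) (st (S i))); [apply steps; lia| |exact Hlr].
    apply IH; lia.
Qed.

Lemma run_sound i : i <= n ->
  forall a b, fst (st i) a b \/ snd (st i) a b -> conv (runion E B) a b.
Proof.
  destruct run as [E0 [R0 steps]].
  induction i as [|i IH]; intros Hi a b Hab.
  - destruct Hab as [Hab|Hab]; [|apply R0 in Hab; destruct Hab].
    apply rt_step. left. apply rstep_rule. left. apply E0, Hab.
  - apply (inf_step_sound E (st i) (st (S i))); [apply steps; lia|apply IH; lia|exact Hab].
Qed.

Hypothesis non_failing : non_failing_run n st.

Lemma run_conv_below i : i <= n ->
  forall a b, fst (st i) a b \/ snd (st i) a b -> conv_below (snd (st n)) a b.
Proof.
  destruct run as [_ [_ steps]].
  pose proof (run_oriented n (le_n n)) as oriented.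
  intros Hi. remember (n - i) as k eqn:Hk. revert i Hi Hk.
  induction k as [|k IH]; intros i Hi Hk a b Hab.
  - replace i with n in Hab by lia. destruct Hab as [Hab|Hab].
    + apply non_failing in Hab. destruct Hab.
    + apply conv_below_rstep; auto. apply rstep_rule, Hab.
  - apply (inf_step_conv_below _ oriented (st i) (st (S i)));
      [apply steps; lia|apply run_oriented; lia|apply IH; lia|exact Hab].
Qed.

Lemma run_conv_eq s t : conv (runion E B) s t <-> conv (runion (snd (st n)) B) s t.
Proof.
  destruct run as [E0 _].
  split; apply conv_incl; intros a b Hab; apply rstep_union in Hab;
    (destruct Hab as [Hab|Hab]; [|apply rt_step; left; apply rstep_union; auto]);
    revert a b Hab; apply rstep_conv; intros l r Hlr.
  - apply conv_below_conv. apply (run_conv_below 0); [lia|]. left. apply E0, Hlr.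
  - apply (run_sound n); auto.
Qed.

Lemma fair_run_critical_pairs : fair_run B n st ->
  forall s t, pcp (snd (st n)) (snd (st n)) (snd (st n)) s t \/
              pcp (snd (st n)) (snd (st n)) (sym_rules B) s t \/
              pcp (snd (st n)) (sym_rules B) (snd (st n)) s t ->
  conv_below (snd (st n)) s t.
Proof.
  intros [_ fair] s t Hcp.
  pose proof (run_oriented n (le_n n)) as oriented.
  destruct (fair s t Hcp) as [Hjoin|[i [Hi Hconv]]].
  - apply conv_below_of_joinable; auto.
  - assert (Ei : forall a b, rstep (fst (st i)) a b -> conv_below (snd (st n)) a b).
    { apply rstep_conv_below. intros l r Hlr. apply (run_conv_below i); auto. }
    destruct Hconv as [Hconv|Hconv]; [auto|apply conv_below_sym; auto].
Qed.

End Run.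

End Modulo.

Theorem corollary5p7 (F : Type) (B : rules F) (gt : relation (term F))
  (E : rules F) (n : nat) (st : nat -> state F) :
  vars_preserving B ->
  B_compatible_reduction_order B gt ->
  is_run B gt E n st ->
  fair_run B n st ->
  non_failing_run n st ->
  (forall s t, conv (runion E B) s t <-> conv (runion (snd (st n)) B) s t) /\
  terminating_mod B (snd (st n)) /\
  church_rosser_mod B (snd (st n)).
Proof.
  intros B_vars gt_order run fair non_failing.
  pose proof (run_oriented B gt gt_order E n st run n (le_n n)) as oriented.
  split; [|split].
  - exact (run_conv_eq B gt gt_order E n st run non_failing).
  - exact (terminating_mod_of_oriented B gt gt_order _ oriented).
  - apply (church_rosser_mod_of_critical_pairs B gt gt_order _ oriented B_vars (proj1 fair)).
    exact (fair_run_critical_pairs B gt gt_order E n st run non_failing fair).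
Qed.
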